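(* Let $M$ be a timelike surface in $\mathbb{R}^{2,1}$ with a canonical null direction with respect to a constant vector $Z$. Then $M$ can be locally parametrized as $$\psi(x,y)=\alpha(x)+y\,T_0,$$ where $\alpha$ is a lightlike curve in $\mathbb{R}^{2,1}$, $T_0$ is a constant lightlike vector, and $\alpha'(x)$ and $T_0$ are linearly independent for every $x$.
   Context: $\mathbb{R}^{2,1}$ is $\mathbb{R}^{3}$ with the metric $-dx_1^2+dx_2^2+dx_3^2$. A surface is timelike if the induced metric has signature $(1,1)$; a vector $v$ is lightlike if $v\ne0$ and $\langle v,v\rangle=0$; a curve is lightlike if its velocity is lightlike everywhere. For a constant vector $Z$, $Z=Z^\top+Z^\perp$ along $M$; $M$ has a canonical null direction with respect to $Z$ if $Z^\top$ is lightlike everywhere on $M$. *)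

From Stdlib Require Import Reals Lra.
Open Scope R_scope.

Record vec := mkV { v1 : R; v2 : R; v3 : R }.

Definition vzero : vec := mkV 0 0 0.
Definition vadd (u w : vec) : vec := mkV (v1 u + v1 w) (v2 u + v2 w) (v3 u + v3 w).
Definition vscale (c : R) (u : vec) : vec := mkV (c * v1 u) (c * v2 u) (c * v3 u).
Definition vsub (u w : vec) : vec := vadd u (vscale (-1) w).

Definition ip (u w : vec) : R := - v1 u * v1 w + v2 u * v2 w + v3 u * v3 w.

Definition lightlike (u : vec) : Prop := u <> vzero /\ ip u u = 0.

Definition lin_indep2 (u w : vec) : Prop :=
  forall a b : R, vadd (vscale a u) (vscale b w) = vzero -> a = 0 /\ b = 0.

Definition open2 (U : R -> R -> Prop) : Prop :=
  forall x y, U x y -> exists r, 0 < r /\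
    forall x' y', Rabs (x' - x) < r -> Rabs (y' - y) < r -> U x' y'.

Definition cont2_on (U : R -> R -> Prop) (f : R -> R -> R) : Prop :=
  forall x y, U x y -> forall eps, 0 < eps -> exists delta, 0 < delta /\
    forall x' y', U x' y' -> Rabs (x' - x) < delta -> Rabs (y' - y) < delta ->
      Rabs (f x' y' - f x y) < eps.

Fixpoint Ck2 (n : nat) (U : R -> R -> Prop) (f : R -> R -> R) : Prop :=
  match n with
  | O => cont2_on U f
  | S m => exists fx fy : R -> R -> R,
      (forall x y, U x y ->
         derivable_pt_lim (fun t => f t y) x (fx x y) /\
         derivable_pt_lim (fun t => f x t) y (fy x y)) /\
      Ck2 m U fx /\ Ck2 m U fy
  end.

Definition smooth2 (U : R -> R -> Prop) (f : R -> R -> R) : Prop :=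
  forall n, Ck2 n U f.

Definition cont1_on (I : R -> Prop) (g : R -> R) : Prop :=
  forall x, I x -> forall eps, 0 < eps -> exists delta, 0 < delta /\
    forall x', I x' -> Rabs (x' - x) < delta -> Rabs (g x' - g x) < eps.

Fixpoint Ck1 (n : nat) (I : R -> Prop) (g : R -> R) : Prop :=
  match n with
  | O => cont1_on I g
  | S m => exists g' : R -> R,
      (forall x, I x -> derivable_pt_lim g x (g' x)) /\ Ck1 m I g'
  end.

Definition smooth1 (I : R -> Prop) (g : R -> R) : Prop := forall n, Ck1 n I g.

Definition smooth_vec2 (U : R -> R -> Prop) (phi : R -> R -> vec) : Prop :=
  smooth2 U (fun x y => v1 (phi x y)) /\ smooth2 U (fun x y => v2 (phi x y)) /\
  smooth2 U (fun x y => v3 (phi x y)).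

Definition smooth_vec1 (I : R -> Prop) (c : R -> vec) : Prop :=
  smooth1 I (fun x => v1 (c x)) /\ smooth1 I (fun x => v2 (c x)) /\
  smooth1 I (fun x => v3 (c x)).

Definition is_deriv_vec1 (I : R -> Prop) (c dc : R -> vec) : Prop :=
  forall x, I x ->
    derivable_pt_lim (fun t => v1 (c t)) x (v1 (dc x)) /\
    derivable_pt_lim (fun t => v2 (c t)) x (v2 (dc x)) /\
    derivable_pt_lim (fun t => v3 (c t)) x (v3 (dc x)).

Definition is_partials (U : R -> R -> Prop) (phi phix phiy : R -> R -> vec) : Prop :=
  forall x y, U x y ->
    derivable_pt_lim (fun t => v1 (phi t y)) x (v1 (phix x y)) /\
    derivable_pt_lim (fun t => v2 (phi t y)) x (v2 (phix x y)) /\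
    derivable_pt_lim (fun t => v3 (phi t y)) x (v3 (phix x y)) /\
    derivable_pt_lim (fun t => v1 (phi x t)) y (v1 (phiy x y)) /\
    derivable_pt_lim (fun t => v2 (phi x t)) y (v2 (phiy x y)) /\
    derivable_pt_lim (fun t => v3 (phi x t)) y (v3 (phiy x y)).

(* Induced metric on span(a,b): [[E,F],[F,G]]; a nondegenerate symmetric 2x2
   form has signature (1,1) iff its determinant is negative. *)
Definition timelike_plane (a b : vec) : Prop :=
  ip a a * ip b b - ip a b * ip a b < 0.

(* Tangential part Z^T of Z w.r.t. the (nondegenerate) tangent plane span(a,b):
   the unique Z^T = c a + d b with <Z - Z^T, a> = <Z - Z^T, b> = 0,
   given by Cramer's rule. *)
Definition tangential_part (Z a b : vec) : vec :=
  let E := ip a a in let F := ip a b in let G := ip b b in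
  let D := E * G - F * F in
  let c := (G * ip Z a - F * ip Z b) / D in
  let d := (E * ip Z b - F * ip Z a) / D in
  vadd (vscale c a) (vscale d b).

Definition timelike_surface (U : R -> R -> Prop) (phi phix phiy : R -> R -> vec) : Prop :=
  open2 U /\ smooth_vec2 U phi /\ is_partials U phi phix phiy /\
  (forall x y, U x y -> lin_indep2 (phix x y) (phiy x y)) /\
  (forall x y, U x y -> timelike_plane (phix x y) (phiy x y)).

Definition canonical_null_direction (U : R -> R -> Prop) (phix phiy : R -> R -> vec)
  (Z : vec) : Prop :=
  forall x y, U x y -> lightlike (tangential_part Z (phix x y) (phiy x y)).

(* The tangential part [Z^T] is null and orthogonal to [Z], so it lies on one of the at most
   two null lines of [Z^perp]; by continuity it stays on one of them, spanned by a fixed null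
   vector [T0], which is therefore tangent to the surface near the base point.  Since [T0] is a
   nonzero vector of the nondegenerate tangent plane, [x = <phi, T0>] has nonzero differential
   and, by the implicit function theorem, can replace one of the parameters.  In the new
   parameters [(x, v)] the derivative [d phi / d v] is tangent and orthogonal to the null tangent
   vector [T0], hence parallel to it: every [v]-curve is a segment of a line of direction [T0],
   and [phi = beta(x) + f(x, v) T0] with [<beta', T0> = 1].  Shifting [beta] by [mu(x) T0] with
   [mu' = - <beta', beta'> / 2] makes [alpha = beta + mu T0] lightlike, and [y = f - mu] is a
   second coordinate, again by the implicit function theorem. *)

From Stdlib Require Import Reals Lra ClassicalEpsilon.
From Coquelicot Require Import Coquelicot.
Open Scope R_scope.

(** * Calculus in two variables *)

Lemma open2_box a b e d : open2 (fun x y => Rabs (x - a) < e /\ Rabs (y - b) < d).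
Proof.
  intros x y [Hx Hy].
  exists (Rmin (e - Rabs (x - a)) (d - Rabs (y - b))). split; [apply Rmin_pos; lra|].
  intros x' y' Hx' Hy'.
  assert (M1 := Rmin_l (e - Rabs (x - a)) (d - Rabs (y - b))).
  assert (M2 := Rmin_r (e - Rabs (x - a)) (d - Rabs (y - b))).
  split.
  - replace (x' - a) with ((x' - x) + (x - a)) by ring.
    eapply Rle_lt_trans; [apply Rabs_triang| lra].
  - replace (y' - b) with ((y' - y) + (y - b)) by ring.
    eapply Rle_lt_trans; [apply Rabs_triang| lra].
Qed.

Lemma open2_swap U : open2 U -> open2 (fun x y => U y x).
Proof. intros H x y Hxy. destruct (H y x Hxy) as [r [Hr HU]]. exists r; split; auto. Qed.

Lemma open2_preimage D O f1 f2 : open2 D -> open2 O -> cont2_on D f1 -> cont2_on D f2 ->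
  open2 (fun x y => D x y /\ O (f1 x y) (f2 x y)).
Proof.
  intros HD HO C1 C2 x y [Hxy Ho].
  destruct (HD x y Hxy) as [r0 [Hr0 HD0]].
  destruct (HO _ _ Ho) as [r [Hr HO0]].
  destruct (C1 x y Hxy r Hr) as [d1 [Hd1 K1]].
  destruct (C2 x y Hxy r Hr) as [d2 [Hd2 K2]].
  exists (Rmin r0 (Rmin d1 d2)). split; [repeat apply Rmin_pos; auto|].
  intros x' y' Hx Hy.
  assert (M1 := Rmin_l r0 (Rmin d1 d2)); assert (M2 := Rmin_r r0 (Rmin d1 d2));
  assert (M3 := Rmin_l d1 d2); assert (M4 := Rmin_r d1 d2).
  assert (D' : D x' y') by (apply HD0; lra).
  split; [exact D'| apply HO0; [apply K1| apply K2]; auto; lra].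
Qed.

Lemma open2_slice_l U x y : open2 U -> U x y ->
  exists r, 0 < r /\ forall z, x - r < z < x + r -> U z y.
Proof.
  intros HO H. destruct (HO x y H) as [r [Hr HU]]. exists r; split; auto.
  intros z Hz; apply HU; [apply Rabs_def1; lra| rewrite Rminus_eq_0, Rabs_R0; lra].
Qed.

Lemma open2_slice_r U x y : open2 U -> U x y ->
  exists r, 0 < r /\ forall z, y - r < z < y + r -> U x z.
Proof.
  intros HO H. destruct (open2_slice_l (fun a b => U b a) y x (open2_swap U HO) H)
    as [r [Hr Hs]].
  exists r; split; auto.
Qed.

Lemma MVT_Rabs (f f' : R -> R) x x' :
  (forall t, Rabs (t - x) <= Rabs (x' - x) -> derivable_pt_lim f t (f' t)) ->
  exists c, Rabs (c - x) <= Rabs (x' - x) /\ f x' - f x = f' c * (x' - x).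
Proof.
  intros H.
  destruct (Rtotal_order x x') as [Hl|[He|Hg]].
  - destruct (MVT_cor2 f f' x x' Hl) as [c [Hc1 Hc2]].
    + intros c Hc; apply H. rewrite !Rabs_right by lra. lra.
    + exists c; split; [rewrite !Rabs_right by lra; lra | lra].
  - subst; exists x'; split; [right; reflexivity| ring].
  - destruct (MVT_cor2 f f' x' x Hg) as [c [Hc1 Hc2]].
    + intros c Hc; apply H. rewrite !Rabs_left1 by lra. lra.
    + exists c; split; [rewrite !Rabs_left1 by lra; lra | lra].
Qed.

Lemma derivable_pt_lim_zero_const (D : R -> R) v0 v :
  (forall s, Rabs (s - v0) <= Rabs (v - v0) -> derivable_pt_lim D s 0) -> D v = D v0.
Proof. intros H. destruct (MVT_Rabs D (fun _ => 0) v0 v H) as [c [_ E]]. lra. Qed.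

Lemma differentiable_pt_lim_of_partials f fx fy x y r : 0 < r ->
  (forall u v, Rabs (u - x) < r -> Rabs (v - y) < r ->
     derivable_pt_lim (fun t => f t v) u (fx u v) /\
     derivable_pt_lim (fun t => f u t) v (fy u v)) ->
  continuity_2d_pt fx x y -> continuity_2d_pt fy x y ->
  differentiable_pt_lim f x y (fx x y) (fy x y).
Proof.
  intros Hr Hd Cx Cy eps.
  destruct (Cx (pos_div_2 eps)) as [d1 H1].
  destruct (Cy (pos_div_2 eps)) as [d2 H2].
  assert (Hd0 : 0 < Rmin r (Rmin d1 d2)).
  { apply Rmin_pos; [lra| apply Rmin_pos; apply cond_pos]. }
  exists (mkposreal _ Hd0). simpl. intros u v Hu Hv.
  assert (M1 := Rmin_l r (Rmin d1 d2)). assert (M2 := Rmin_r r (Rmin d1 d2)).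
  assert (M3 := Rmin_l d1 d2). assert (M4 := Rmin_r d1 d2).
  assert (Hx0 : Rabs (x - x) = 0) by (rewrite Rminus_eq_0; apply Rabs_R0).
  destruct (MVT_Rabs (fun t => f t v) (fun t => fx t v) x u) as [c [Hc Ec]].
  { intros t Ht. apply (proj1 (Hd t v ltac:(lra) ltac:(lra))). }
  destruct (MVT_Rabs (fun t => f x t) (fun t => fy x t) y v) as [c' [Hc' Ec']].
  { intros t Ht. apply (proj2 (Hd x t ltac:(lra) ltac:(lra))). }
  simpl in Ec, Ec'.
  replace (f u v - f x y - (fx x y * (u - x) + fy x y * (v - y)))
    with ((fx c v - fx x y) * (u - x) + (fy x c' - fy x y) * (v - y)) by lra.
  assert (K1 : Rabs (fx c v - fx x y) < eps / 2) by (apply H1; lra).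
  assert (K2 : Rabs (fy x c' - fy x y) < eps / 2) by (apply H2; lra).
  eapply Rle_trans; [apply Rabs_triang|]. rewrite !Rabs_mult.
  assert (N1 := Rmax_l (Rabs (u - x)) (Rabs (v - y))).
  assert (N2 := Rmax_r (Rabs (u - x)) (Rabs (v - y))).
  assert (P1 := Rabs_pos (u - x)). assert (P2 := Rabs_pos (v - y)).
  assert (P3 := Rabs_pos (fx c v - fx x y)). assert (P4 := Rabs_pos (fy x c' - fy x y)).
  assert (He := cond_pos eps).
  nra.
Qed.

Lemma continuity_2d_pt_of_cont2_on U f x y :
  open2 U -> cont2_on U f -> U x y -> continuity_2d_pt f x y.
Proof.
  intros HO HC Hxy eps.
  destruct (HO x y Hxy) as [r [Hr HU]].
  destruct (HC x y Hxy eps (cond_pos eps)) as [d [Hd Hf]].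
  assert (H0 : 0 < Rmin r d) by (apply Rmin_pos; lra).
  exists (mkposreal _ H0). simpl. intros u v Hu Hv.
  assert (M1 := Rmin_l r d). assert (M2 := Rmin_r r d).
  apply Hf; [apply HU| |]; lra.
Qed.

Lemma cont2_on_of_continuity_2d_pt U f :
  (forall x y, U x y -> continuity_2d_pt f x y) -> cont2_on U f.
Proof.
  intros H x y Hxy eps He. destruct (H x y Hxy (mkposreal _ He)) as [d Hd].
  exists d; split; [apply cond_pos|]. intros; apply Hd; auto.
Qed.

Lemma derivable_pt_lim_open2_ext_l U f g x y l : open2 U -> U x y ->
  (forall a b, U a b -> f a b = g a b) ->
  derivable_pt_lim (fun t => f t y) x l -> derivable_pt_lim (fun t => g t y) x l.
Proof.
  intros HO H E D. destruct (open2_slice_l U x y HO H) as [r [Hr Hs]].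
  apply (derivable_pt_lim_locally_ext (fun t => f t y) _ x (x - r) (x + r)); [lra| |auto].
  intros z Hz; apply E, Hs; auto.
Qed.

Lemma derivable_pt_lim_open2_ext_r U f g x y l : open2 U -> U x y ->
  (forall a b, U a b -> f a b = g a b) ->
  derivable_pt_lim (fun t => f x t) y l -> derivable_pt_lim (fun t => g x t) y l.
Proof.
  intros HO H E D. destruct (open2_slice_r U x y HO H) as [r [Hr Hs]].
  apply (derivable_pt_lim_locally_ext (fun t => f x t) _ y (y - r) (y + r)); [lra| |auto].
  intros z Hz; apply E, Hs; auto.
Qed.

Lemma Ck2_restrict n : forall U V f, Ck2 n U f -> (forall x y, V x y -> U x y) -> Ck2 n V f.
Proof.
  induction n as [|n IH]; simpl; intros U V f H HV.
  - intros x y Hxy eps He. destruct (H x y (HV _ _ Hxy) eps He) as [d [Hd Hf]].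
    exists d; split; auto.
  - destruct H as [fx [fy [Hd [H1 H2]]]]. exists fx, fy.
    split; [intros; apply Hd; auto| split; eapply IH; eauto].
Qed.

Lemma Ck2_ext n : forall U f g, open2 U -> (forall x y, U x y -> f x y = g x y) ->
  Ck2 n U f -> Ck2 n U g.
Proof.
  induction n as [|n IH]; simpl; intros U f g HO E H.
  - intros x y Hxy eps He. destruct (H x y Hxy eps He) as [d [Hd Hf]].
    exists d; split; auto. intros x' y' H' ? ?. rewrite <- !E; auto.
  - destruct H as [fx [fy [Hd [H1 H2]]]]. exists fx, fy; repeat split; auto.
    + eapply derivable_pt_lim_open2_ext_l; eauto. apply Hd; auto.
    + eapply derivable_pt_lim_open2_ext_r; eauto. apply Hd; auto.
Qed.

Lemma Ck2_swap n : forall U f, Ck2 n U f -> Ck2 n (fun x y => U y x) (fun x y => f y x).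
Proof.
  induction n as [|n IH]; simpl; intros U f H.
  - intros x y Hxy eps He. destruct (H y x Hxy eps He) as [d [Hd Hf]].
    exists d; split; auto.
  - destruct H as [fx [fy [Hd [H1 H2]]]].
    exists (fun x y => fy y x), (fun x y => fx y x).
    split; [intros x y Hxy; split; apply Hd; auto| split; apply IH; auto].
Qed.

Lemma Ck2_cont n : forall U f, open2 U -> Ck2 n U f -> cont2_on U f.
Proof.
  induction n as [|n IH]; simpl; intros U f HO H; auto.
  destruct H as [fx [fy [Hd [H1 H2]]]].
  apply cont2_on_of_continuity_2d_pt. intros x y Hxy.
  apply differentiable_continuity_pt. exists (fx x y), (fy x y).
  destruct (HO x y Hxy) as [r [Hr HU]].
  apply (differentiable_pt_lim_of_partials f fx fy x y r Hr).
  - intros; apply Hd; auto.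
  - eapply continuity_2d_pt_of_cont2_on; eauto.
  - eapply continuity_2d_pt_of_cont2_on; eauto.
Qed.

Lemma Ck2_differentiable U f fx fy x y : open2 U -> U x y ->
  (forall x y, U x y -> derivable_pt_lim (fun t => f t y) x (fx x y) /\
                        derivable_pt_lim (fun t => f x t) y (fy x y)) ->
  cont2_on U fx -> cont2_on U fy ->
  differentiable_pt_lim f x y (fx x y) (fy x y).
Proof.
  intros HO Hxy Hd C1 C2. destruct (HO x y Hxy) as [r [Hr HU]].
  apply (differentiable_pt_lim_of_partials f fx fy x y r Hr).
  - intros; apply Hd; auto.
  - eapply continuity_2d_pt_of_cont2_on; eauto.
  - eapply continuity_2d_pt_of_cont2_on; eauto.
Qed.

Lemma Ck2_pred n : forall U f, open2 U -> Ck2 (S n) U f -> Ck2 n U f.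
Proof.
  induction n as [|n IH]; intros U f HO H.
  - eapply Ck2_cont; eauto.
  - destruct H as [fx [fy [Hd [H1 H2]]]].
    exists fx, fy; repeat split; auto; apply Hd; auto.
Qed.

Lemma Ck2_const n U c : Ck2 n U (fun _ _ => c).
Proof.
  revert c; induction n as [|n IH]; simpl; intros c.
  - intros x y _ eps He. exists 1; split; [lra|].
    intros. rewrite Rminus_eq_0, Rabs_R0; lra.
  - exists (fun _ _ => 0), (fun _ _ => 0).
    split; [intros; split; apply derivable_pt_lim_const| split; apply IH].
Qed.

Lemma Ck2_fst n U : Ck2 n U (fun x _ => x).
Proof.
  destruct n; simpl.
  - intros x y _ eps He. exists eps; split; auto.
  - exists (fun _ _ => 1), (fun _ _ => 0).
    split; [intros; split; [apply derivable_pt_lim_id| apply derivable_pt_lim_const]|].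
    split; apply Ck2_const.
Qed.

Lemma Ck2_snd n U : Ck2 n U (fun _ y => y).
Proof.
  destruct n; simpl.
  - intros x y _ eps He. exists eps; split; auto.
  - exists (fun _ _ => 0), (fun _ _ => 1).
    split; [intros; split; [apply derivable_pt_lim_const| apply derivable_pt_lim_id]|].
    split; apply Ck2_const.
Qed.

Lemma cont2_on_comp U V f G1 G2 : cont2_on V f -> cont2_on U G1 -> cont2_on U G2 ->
  (forall x y, U x y -> V (G1 x y) (G2 x y)) ->
  cont2_on U (fun x y => f (G1 x y) (G2 x y)).
Proof.
  intros Hf H1 H2 HG x y Hxy eps He.
  destruct (Hf _ _ (HG x y Hxy) eps He) as [d [Hd Hfd]].
  destruct (H1 x y Hxy d Hd) as [d1 [Hd1 K1]].
  destruct (H2 x y Hxy d Hd) as [d2 [Hd2 K2]].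
  exists (Rmin d1 d2); split; [apply Rmin_pos; auto|].
  assert (M1 := Rmin_l d1 d2). assert (M2 := Rmin_r d1 d2).
  intros x' y' H' Hx Hy. apply Hfd; [auto| apply K1| apply K2]; auto; lra.
Qed.

Lemma cont2_on_binop (op : R -> R -> R) (D U : R -> R -> Prop) f g :
  (forall a b, D a b -> continuity_2d_pt op a b) ->
  (forall x y, U x y -> D (f x y) (g x y)) ->
  cont2_on U f -> cont2_on U g -> cont2_on U (fun x y => op (f x y) (g x y)).
Proof.
  intros Hop HD Hf Hg. apply (cont2_on_comp U D); auto.
  apply cont2_on_of_continuity_2d_pt; auto.
Qed.

Lemma Ck2_plus n : forall U f g, Ck2 n U f -> Ck2 n U g -> Ck2 n U (fun x y => f x y + g x y).
Proof.
  induction n as [|n IH]; simpl; intros U f g Hf Hg.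
  - apply (cont2_on_binop Rplus (fun _ _ => True)); auto. intros a b _.
    apply continuity_2d_pt_plus; [apply continuity_2d_pt_id1| apply continuity_2d_pt_id2].
  - destruct Hf as [fx [fy [Hdf [F1 F2]]]]. destruct Hg as [gx [gy [Hdg [G1 G2]]]].
    exists (fun x y => fx x y + gx x y), (fun x y => fy x y + gy x y).
    repeat split; auto; apply derivable_pt_lim_plus; (apply Hdf || apply Hdg); auto.
Qed.

Lemma Ck2_mult n : forall U f g, open2 U -> Ck2 n U f -> Ck2 n U g ->
  Ck2 n U (fun x y => f x y * g x y).
Proof.
  induction n as [|n IH]; intros U f g HO Hf Hg.
  - apply (cont2_on_binop Rmult (fun _ _ => True)); auto. intros a b _.
    apply continuity_2d_pt_mult; [apply continuity_2d_pt_id1| apply continuity_2d_pt_id2].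
  - assert (Hf' := Ck2_pred _ _ _ HO Hf). assert (Hg' := Ck2_pred _ _ _ HO Hg).
    destruct Hf as [fx [fy [Hdf [F1 F2]]]]. destruct Hg as [gx [gy [Hdg [G1 G2]]]].
    exists (fun x y => fx x y * g x y + f x y * gx x y),
           (fun x y => fy x y * g x y + f x y * gy x y).
    repeat split.
    + apply (derivable_pt_lim_mult (fun t => f t y) (fun t => g t y));
        [apply Hdf| apply Hdg]; auto.
    + apply (derivable_pt_lim_mult (fun t => f x t) (fun t => g x t));
        [apply Hdf| apply Hdg]; auto.
    + apply Ck2_plus; apply IH; auto.
    + apply Ck2_plus; apply IH; auto.
Qed.

Lemma Ck2_inv n : forall U f, open2 U -> (forall x y, U x y -> f x y <> 0) ->
  Ck2 n U f -> Ck2 n U (fun x y => / f x y).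
Proof.
  induction n as [|n IH]; intros U f HO Hn Hf.
  - apply (cont2_on_binop (fun a _ => / a) (fun a _ => a <> 0) U f (fun _ _ => 0)); auto.
    + intros a b Ha. apply (continuity_2d_pt_inv (fun u _ => u)); auto.
      apply continuity_2d_pt_id1.
    + apply (Ck2_const 0).
  - assert (Hi := IH _ _ HO Hn (Ck2_pred _ _ _ HO Hf)).
    destruct Hf as [fx [fy [Hdf [F1 F2]]]].
    exists (fun x y => (-1) * fx x y * ((/ f x y) * (/ f x y))),
           (fun x y => (-1) * fy x y * ((/ f x y) * (/ f x y))).
    repeat split.
    + replace ((-1) * fx x y * (/ f x y * / f x y)) with (- fx x y / f x y ^ 2)
        by (field; apply Hn; auto).
      apply (is_derive_Reals (fun t => / f t y)), (is_derive_inv (fun t => f t y));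
        [apply is_derive_Reals, Hdf| apply Hn]; auto.
    + replace ((-1) * fy x y * (/ f x y * / f x y)) with (- fy x y / f x y ^ 2)
        by (field; apply Hn; auto).
      apply (is_derive_Reals (fun t => / f x t)), (is_derive_inv (fun t => f x t));
        [apply is_derive_Reals, Hdf| apply Hn]; auto.
    + apply Ck2_mult; auto; apply Ck2_mult; auto; apply Ck2_const.
    + apply Ck2_mult; auto; apply Ck2_mult; auto; apply Ck2_const.
Qed.

Lemma Ck2_comp n : forall U V f G1 G2, open2 U -> open2 V ->
  Ck2 n V f -> Ck2 n U G1 -> Ck2 n U G2 ->
  (forall x y, U x y -> V (G1 x y) (G2 x y)) ->
  Ck2 n U (fun x y => f (G1 x y) (G2 x y)).
Proof.
  induction n as [|n IH]; intros U V f G1 G2 HU HV Hf H1 H2 HG.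
  - eapply cont2_on_comp; eauto.
  - assert (H1' := Ck2_pred _ _ _ HU H1). assert (H2' := Ck2_pred _ _ _ HU H2).
    destruct Hf as [fx [fy [Hdf [F1 F2]]]].
    destruct H1 as [ax [ay [Hda [A1 A2]]]]. destruct H2 as [bx [by' [Hdb [B1 B2]]]].
    assert (Dif : forall x y, U x y -> differentiable_pt_lim f (G1 x y) (G2 x y)
                    (fx (G1 x y) (G2 x y)) (fy (G1 x y) (G2 x y))).
    { intros x y Hxy. apply (Ck2_differentiable V); auto; eapply Ck2_cont; eauto. }
    exists (fun x y => fx (G1 x y) (G2 x y) * ax x y + fy (G1 x y) (G2 x y) * bx x y),
           (fun x y => fx (G1 x y) (G2 x y) * ay x y + fy (G1 x y) (G2 x y) * by' x y).
    repeat split.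
    + apply (derivable_pt_lim_comp_2d f (fun t => G1 t y) (fun t => G2 t y)); auto;
        [apply Hda| apply Hdb]; auto.
    + apply (derivable_pt_lim_comp_2d f (fun t => G1 x t) (fun t => G2 x t)); auto;
        [apply Hda| apply Hdb]; auto.
    + apply Ck2_plus; apply Ck2_mult; auto; eapply IH; eauto.
    + apply Ck2_plus; apply Ck2_mult; auto; eapply IH; eauto.
Qed.

Lemma Ck2_slice n : forall U I f c, Ck2 n U f -> (forall x, I x -> U x c) ->
  Ck1 n I (fun x => f x c).
Proof.
  induction n as [|n IH]; simpl; intros U I f c H HI.
  - intros x Hx eps He. destruct (H x c (HI x Hx) eps He) as [d [Hd Hf]].
    exists d; split; auto. intros x' Hx' Hxx. apply Hf; auto.
    rewrite Rminus_eq_0, Rabs_R0; lra.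
  - destruct H as [fx [fy [Hd [H1 H2]]]]. exists (fun x => fx x c).
    split; [intros x Hx; apply (Hd x c (HI x Hx))| eapply IH; eauto].
Qed.

Lemma Ck2_of_Ck1 n : forall (I : R -> Prop) (U : R -> R -> Prop) m, Ck1 n I m ->
  (forall x y, U x y -> I x) -> Ck2 n U (fun x _ => m x).
Proof.
  induction n as [|n IH]; simpl; intros I U m H HU.
  - intros x y Hxy eps He. destruct (H x (HU x y Hxy) eps He) as [d [Hd Hf]].
    exists d; split; auto. intros x' y' H' ? ?. apply Hf; eauto.
  - destruct H as [m' [Hd H1]]. exists (fun x _ => m' x), (fun _ _ => 0).
    split; [|split; [eapply IH; eauto| apply Ck2_const]].
    intros x y Hxy; split; [apply Hd; eauto| apply derivable_pt_lim_const].
Qed.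

Lemma smooth2_const U c : smooth2 U (fun _ _ => c).
Proof. intro n; apply Ck2_const. Qed.
Lemma smooth2_fst U : smooth2 U (fun x _ => x).
Proof. intro n; apply Ck2_fst. Qed.
Lemma smooth2_snd U : smooth2 U (fun _ y => y).
Proof. intro n; apply Ck2_snd. Qed.
Lemma smooth2_plus U f g : smooth2 U f -> smooth2 U g -> smooth2 U (fun x y => f x y + g x y).
Proof. intros H1 H2 n; apply Ck2_plus; auto. Qed.
Lemma smooth2_mult U f g : open2 U -> smooth2 U f -> smooth2 U g ->
  smooth2 U (fun x y => f x y * g x y).
Proof. intros HO H1 H2 n; apply Ck2_mult; auto. Qed.
Lemma smooth2_inv U f : open2 U -> (forall x y, U x y -> f x y <> 0) -> smooth2 U f ->
  smooth2 U (fun x y => / f x y).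
Proof. intros HO Hn H n; apply Ck2_inv; auto. Qed.
Lemma smooth2_comp U V f G1 G2 : open2 U -> open2 V ->
  smooth2 V f -> smooth2 U G1 -> smooth2 U G2 ->
  (forall x y, U x y -> V (G1 x y) (G2 x y)) -> smooth2 U (fun x y => f (G1 x y) (G2 x y)).
Proof. intros; intro n; eapply Ck2_comp; eauto. Qed.
Lemma smooth2_restrict U V f : smooth2 U f -> (forall x y, V x y -> U x y) -> smooth2 V f.
Proof. intros H HV n; eapply Ck2_restrict; eauto. Qed.
Lemma smooth2_ext U f g : open2 U -> (forall x y, U x y -> f x y = g x y) ->
  smooth2 U f -> smooth2 U g.
Proof. intros HO E H n; eapply Ck2_ext; eauto. Qed.
Lemma smooth2_swap U f : smooth2 U f -> smooth2 (fun x y => U y x) (fun x y => f y x).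
Proof. intros H n; apply Ck2_swap; auto. Qed.
Lemma smooth2_cont U f : open2 U -> smooth2 U f -> cont2_on U f.
Proof. intros HO H; apply (Ck2_cont 0); auto. Qed.

Lemma smooth2_opp U f : open2 U -> smooth2 U f -> smooth2 U (fun x y => - f x y).
Proof.
  intros HO H. apply (smooth2_ext U (fun x y => (-1) * f x y)); auto; [intros; ring|].
  apply smooth2_mult; auto. apply smooth2_const.
Qed.
Lemma smooth2_minus U f g : open2 U -> smooth2 U f -> smooth2 U g ->
  smooth2 U (fun x y => f x y - g x y).
Proof. intros. apply smooth2_plus; auto. apply smooth2_opp; auto. Qed.
Lemma smooth2_div U f g : open2 U -> (forall x y, U x y -> g x y <> 0) ->
  smooth2 U f -> smooth2 U g -> smooth2 U (fun x y => f x y / g x y).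
Proof. intros. apply smooth2_mult; auto. apply smooth2_inv; auto. Qed.

Lemma smooth2_partials U f : open2 U -> smooth2 U f ->
  exists fx fy, (forall x y, U x y -> derivable_pt_lim (fun t => f t y) x (fx x y) /\
                                    derivable_pt_lim (fun t => f x t) y (fy x y)) /\
                smooth2 U fx /\ smooth2 U fy.
Proof.
  intros HO H. destruct (H 1%nat) as [fx [fy [Hd _]]].
  exists fx, fy; split; [exact Hd|].
  split; intro n; destruct (H (S n)) as [gx [gy [Hg [G1 G2]]]].
  - apply (Ck2_ext n U gx fx HO); [|exact G1]. intros x y Hxy.
    eapply uniqueness_limite; [apply Hg| apply Hd]; auto.
  - apply (Ck2_ext n U gy fy HO); [|exact G2]. intros x y Hxy.
    eapply uniqueness_limite; [apply Hg| apply Hd]; auto.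
Qed.

Lemma smooth2_partials_of U f fx fy : open2 U -> smooth2 U f ->
  (forall x y, U x y -> derivable_pt_lim (fun t => f t y) x (fx x y) /\
                        derivable_pt_lim (fun t => f x t) y (fy x y)) ->
  smooth2 U fx /\ smooth2 U fy.
Proof.
  intros HO H Hd. destruct (smooth2_partials U f HO H) as [gx [gy [Hg [Sx Sy]]]].
  split; [apply (smooth2_ext U gx fx HO)| apply (smooth2_ext U gy fy HO)]; auto;
    intros x y Hxy; eapply uniqueness_limite; (apply Hg || apply Hd); auto.
Qed.

Lemma smooth2_slice U I f c : smooth2 U f -> (forall x, I x -> U x c) ->
  smooth1 I (fun x => f x c).
Proof. intros H HI n; eapply Ck2_slice; eauto. Qed.

Lemma smooth2_of_smooth1 (I : R -> Prop) (U : R -> R -> Prop) m : smooth1 I m ->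
  (forall x y, U x y -> I x) -> smooth2 U (fun x _ => m x).
Proof. intros H HU n; eapply Ck2_of_Ck1; eauto. Qed.

Lemma smooth1_of_derive (I : R -> Prop) g g' :
  (forall x, I x -> derivable_pt_lim g x (g' x)) -> smooth1 I g' -> smooth1 I g.
Proof.
  intros Hd H n. destruct n; simpl.
  - intros x Hx eps He.
    assert (Cg : continuity_pt g x)
      by (apply derivable_continuous_pt; exists (g' x); apply Hd; auto).
    destruct (Cg eps He) as [d [Hd0 Hf]].
    exists d; split; auto. intros x' Hx' Hxx.
    destruct (Req_dec x' x) as [->|Hne]; [rewrite Rminus_eq_0, Rabs_R0; lra|].
    apply (Hf x'). split; [split; [constructor| auto]| exact Hxx].
  - exists g'; split; auto.
Qed.

Lemma derivable_pt_lim_RInt (Q : R -> R) a b x0 : a < x0 < b ->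
  cont1_on (fun x => a < x < b) Q ->
  forall x, a < x < b -> derivable_pt_lim (fun x => RInt Q x0 x) x (Q x).
Proof.
  intros Hx0 HQ.
  assert (CQ : forall z, a < z < b -> continuous Q z).
  { intros z Hz. apply continuity_pt_filterlim.
    intros e He. destruct (HQ z Hz e He) as [d [Hd Hf]].
    exists (Rmin d (Rmin (z - a) (b - z))). split.
    - apply Rmin_pos; [lra| apply Rmin_pos; lra].
    - intros z' [[_ Hzz] Hd']. unfold dist in *; simpl in *; unfold R_dist in *.
      assert (M1 := Rmin_l d (Rmin (z - a) (b - z))).
      assert (M2 := Rmin_r d (Rmin (z - a) (b - z))).
      assert (M3 := Rmin_l (z - a) (b - z)). assert (M4 := Rmin_r (z - a) (b - z)).
      apply Rabs_def2 in Hd'. apply Hf; [lra| apply Rabs_def1; lra]. }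
  intros x Hx. apply is_derive_Reals.
  apply (is_derive_RInt Q (fun x => RInt Q x0 x) x0 x); [|apply CQ; auto].
  apply (locally_interval _ x a b); try (simpl; lra).
  intros y Hay Hyb. simpl in Hay, Hyb.
  apply (RInt_correct (V := R_CompleteNormedModule)).
  apply (ex_RInt_continuous (V := R_CompleteNormedModule)).
  intros z Hz. apply CQ.
  assert (Rmin x0 y <= z <= Rmax x0 y) by exact Hz.
  unfold Rmin, Rmax in H; destruct (Rle_dec x0 y); lra.
Qed.

(** * The implicit function theorem *)

(* The mean value theorem puts the difference quotients of an implicit function in this form. *)
Lemma derivable_pt_lim_of_quotients f x (A B : R -> R -> R) a1 a2 b1 b2 :
  continuity_2d_pt A a1 a2 -> continuity_2d_pt B b1 b2 -> B b1 b2 <> 0 ->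
  (forall d, 0 < d -> exists e, 0 < e /\ forall h, h <> 0 -> Rabs h < e ->
     exists x1 x2 y1 y2, Rabs (x1 - a1) < d /\ Rabs (x2 - a2) < d /\
       Rabs (y1 - b1) < d /\ Rabs (y2 - b2) < d /\
       (f (x + h) - f x) / h = A x1 x2 / B y1 y2) ->
  derivable_pt_lim f x (A a1 a2 / B b1 b2).
Proof.
  intros CA CB Bn Hq eps He.
  assert (Cd : continuity_2d_pt (fun u v => u * / v) (A a1 a2) (B b1 b2)).
  { apply continuity_2d_pt_mult; [apply continuity_2d_pt_id1|].
    apply (continuity_2d_pt_inv (fun _ v => v)); auto. apply continuity_2d_pt_id2. }
  destruct (Cd (mkposreal _ He)) as [eta Heta].
  destruct (CA eta) as [dA HA]. destruct (CB eta) as [dB HB].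
  assert (Hd : 0 < Rmin dA dB) by (apply Rmin_pos; apply cond_pos).
  assert (M1 := Rmin_l dA dB). assert (M2 := Rmin_r dA dB).
  destruct (Hq _ Hd) as [e [He0 He1]].
  exists (mkposreal _ He0). simpl. intros h Hh Hhe.
  destruct (He1 h Hh Hhe) as [x1 [x2 [y1 [y2 [L1 [L2 [L3 [L4 EQ]]]]]]]].
  rewrite EQ. apply (Heta (A x1 x2) (B y1 y2)); [apply HA| apply HB]; lra.
Qed.

Lemma Rabs_between a b c x R : Rabs (a - x) < R -> Rabs (b - x) < R ->
  Rabs (c - a) <= Rabs (b - a) -> Rabs (c - x) < 3 * R.
Proof.
  intros Ha Hb Hc.
  assert (T1 : Rabs (c - x) <= Rabs (c - a) + Rabs (a - x))
    by (replace (c - x) with ((c - a) + (a - x)) by ring; apply Rabs_triang).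
  assert (T2 : Rabs (b - a) <= Rabs (b - x) + Rabs (x - a))
    by (replace (b - a) with ((b - x) + (x - a)) by ring; apply Rabs_triang).
  rewrite (Rabs_minus_sym x a) in T2. lra.
Qed.

Section ImplicitFunction.

Variables (U : R -> R -> Prop) (F Ft Fp : R -> R -> R) (t0 p0 m R0 : R).
Hypothesis HO : open2 U.
Hypothesis HF : forall t p, U t p ->
  derivable_pt_lim (fun s => F s p) t (Ft t p) /\ derivable_pt_lim (fun s => F t s) p (Fp t p).
Hypotheses (SF : smooth2 U F) (SFt : smooth2 U Ft) (SFp : smooth2 U Fp).
Hypotheses (Hm : 0 < m) (HR0 : 0 < R0).
Hypothesis Hbox : forall t p, Rabs (t - t0) < R0 -> Rabs (p - p0) < R0 -> U t p /\ m < Ft t p.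

Let z0 := F t0 p0.
(* Mean value points between two solutions in [|t - t0| < r] stay in the box [3 r < R0]. *)
Let r := R0 / 4.
Let eps := m * r / 2.

Lemma ift_increasing p t1 t2 : Rabs (p - p0) < R0 -> Rabs (t1 - t0) < R0 ->
  Rabs (t2 - t0) < R0 -> t1 <= t2 -> m * (t2 - t1) <= F t2 p - F t1 p.
Proof.
  intros Hp H1 H2 [Hlt|<-]; [|lra].
  apply Rabs_def2 in H1. apply Rabs_def2 in H2.
  assert (Bc : forall c, t1 <= c <= t2 -> U c p /\ m < Ft c p)
    by (intros c Hc; apply Hbox; auto; apply Rabs_def1; lra).
  destruct (MVT_cor2 (fun s => F s p) (fun s => Ft s p) t1 t2 Hlt) as [c [Ec Hc]].
  { intros c Hc. apply HF, Bc; auto. }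
  rewrite Ec. assert (m < Ft c p) by (apply Bc; lra). nra.
Qed.

Lemma ift_expanding p t1 t2 : Rabs (p - p0) < R0 -> Rabs (t1 - t0) < R0 ->
  Rabs (t2 - t0) < R0 -> m * Rabs (t2 - t1) <= Rabs (F t2 p - F t1 p).
Proof.
  intros Hp H1 H2. destruct (Rle_dec t1 t2) as [Hle|Hgt].
  - assert (I := ift_increasing p t1 t2 Hp H1 H2 Hle).
    rewrite !Rabs_right by nra. exact I.
  - assert (I := ift_increasing p t2 t1 Hp H2 H1 ltac:(lra)).
    rewrite !Rabs_left1 by nra. lra.
Qed.

Lemma ift_endpoint_gap : exists dl, 0 < dl <= R0 /\ forall p, Rabs (p - p0) < dl ->
  z0 + eps < F (t0 + r) p /\ F (t0 - r) p < z0 - eps.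
Proof.
  assert (Hr : 0 < r) by (unfold r; lra).
  assert (Heps : 0 < eps) by (unfold eps; nra).
  assert (Hr' : Rabs r < R0) by (rewrite Rabs_right; unfold r; lra).
  assert (Hr'' : Rabs (- r) < R0) by (rewrite Rabs_Ropp; auto).
  assert (H00 : Rabs (p0 - p0) < R0) by (rewrite Rminus_eq_0, Rabs_R0; auto).
  assert (Ht0 : Rabs (t0 - t0) < R0) by (rewrite Rminus_eq_0, Rabs_R0; auto).
  assert (Up : U (t0 + r) p0) by (apply Hbox; auto; replace (t0 + r - t0) with r by ring; auto).
  assert (Um : U (t0 - r) p0) by (apply Hbox; auto; replace (t0 - r - t0) with (- r) by ring; auto).
  assert (Gp := ift_increasing p0 t0 (t0 + r) H00 Ht0
                  ltac:(replace (t0 + r - t0) with r by ring; auto) ltac:(lra)).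
  assert (Gm := ift_increasing p0 (t0 - r) t0 H00
                  ltac:(replace (t0 - r - t0) with (- r) by ring; auto) Ht0 ltac:(lra)).
  assert (CF := smooth2_cont U F HO SF).
  destruct (continuity_2d_pt_of_cont2_on U F _ _ HO CF Up (mkposreal _ Heps)) as [db Hdb].
  destruct (continuity_2d_pt_of_cont2_on U F _ _ HO CF Um (mkposreal _ Heps)) as [dc Hdc].
  simpl in Hdb, Hdc.
  exists (Rmin R0 (Rmin db dc)).
  assert (M1 := Rmin_l R0 (Rmin db dc)). assert (M2 := Rmin_r R0 (Rmin db dc)).
  assert (M3 := Rmin_l db dc). assert (M4 := Rmin_r db dc).
  split; [split; [repeat apply Rmin_pos; auto; apply cond_pos| auto]|].
  intros p Hp.
  assert (A1 := Hdb (t0 + r) p ltac:(rewrite Rminus_eq_0, Rabs_R0; apply cond_pos) ltac:(lra)).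
  assert (A2 := Hdc (t0 - r) p ltac:(rewrite Rminus_eq_0, Rabs_R0; apply cond_pos) ltac:(lra)).
  apply Rabs_def2 in A1. apply Rabs_def2 in A2. unfold z0, eps in *. lra.
Qed.

Section Inverse.

Variable dl : R.
Hypothesis Hdl : 0 < dl <= R0.
Hypothesis Hgap : forall p, Rabs (p - p0) < dl ->
  z0 + eps < F (t0 + r) p /\ F (t0 - r) p < z0 - eps.

Definition ift_dom z p := Rabs (z - z0) < eps /\ Rabs (p - p0) < dl.

Definition ift_inverse z p : R :=
  epsilon (inhabits 0) (fun t => Rabs (t - t0) < r /\ F t p = z).

Let Hr : 0 < r. Proof. unfold r; lra. Qed.

Lemma ift_solvable z p : ift_dom z p -> exists t, Rabs (t - t0) < r /\ F t p = z.
Proof.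
  intros [Hz Hp]. destruct (Hgap p Hp) as [E1 E2]. apply Rabs_def2 in Hz.
  destruct (Ranalysis5.IVT_interv (fun s => F s p - z) (t0 - r) (t0 + r)) as [t [Ht Eq]].
  - intros a Ha. apply continuity_pt_minus; [|apply continuity_pt_const; intros ? ?; auto].
    apply derivable_continuous_pt. exists (Ft a p).
    apply HF, Hbox; [apply Rabs_def1; unfold r in *| ]; lra.
  - lra.
  - simpl; unfold eps in *; lra.
  - simpl; unfold eps in *; lra.
  - simpl in Eq. exists t; split; [|lra].
    assert (t <> t0 - r) by (intro; subst; lra).
    assert (t <> t0 + r) by (intro; subst; lra).
    apply Rabs_def1; lra.
Qed.

Lemma ift_inverse_spec z p : ift_dom z p ->
  Rabs (ift_inverse z p - t0) < r /\ F (ift_inverse z p) p = z.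
Proof.
  intros Hzp. unfold ift_inverse.
  apply (epsilon_spec (inhabits 0) (fun t => Rabs (t - t0) < r /\ F t p = z)).
  apply ift_solvable; auto.
Qed.

Lemma ift_inverse_box z p : ift_dom z p ->
  U (ift_inverse z p) p /\ m < Ft (ift_inverse z p) p.
Proof.
  intros Hzp. destruct (ift_inverse_spec z p Hzp) as [Kr _].
  destruct Hzp as [_ Hp]. apply Hbox; unfold r in *; lra.
Qed.

Lemma ift_inverse_unique t p : Rabs (t - t0) < r -> Rabs (p - p0) < dl ->
  Rabs (F t p - z0) < eps -> ift_inverse (F t p) p = t.
Proof.
  intros Ht Hp Hz. assert (Hd : ift_dom (F t p) p) by (split; auto).
  destruct (ift_inverse_spec _ _ Hd) as [Kr KF].
  assert (E := ift_expanding p t (ift_inverse (F t p) p)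
                 ltac:(lra) ltac:(unfold r in *; lra) ltac:(unfold r in *; lra)).
  rewrite KF, Rminus_eq_0, Rabs_R0 in E.
  assert (Rabs (ift_inverse (F t p) p - t) = 0)
    by (assert (X := Rabs_pos (ift_inverse (F t p) p - t)); nra).
  apply Rabs_eq_0 in H. lra.
Qed.

Lemma ift_inverse_cont : cont2_on ift_dom ift_inverse.
Proof.
  intros z p Hzp e He.
  set (k := ift_inverse z p).
  destruct (ift_inverse_spec z p Hzp) as [Kr KF]. fold k in Kr, KF.
  assert (Uk := proj1 (ift_inverse_box z p Hzp)). fold k in Uk.
  assert (Hme : 0 < m * e / 2) by nra.
  destruct (continuity_2d_pt_of_cont2_on U F _ _ HO (smooth2_cont U F HO SF) Uk
              (mkposreal _ Hme)) as [d1 Hd1]. simpl in Hd1.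
  exists (Rmin d1 (m * e / 2)). split; [apply Rmin_pos; [apply cond_pos| auto]|].
  intros z' p' Hzp' Hzz Hpp.
  assert (M1 := Rmin_l d1 (m * e / 2)). assert (M2 := Rmin_r d1 (m * e / 2)).
  destruct (ift_inverse_spec z' p' Hzp') as [Kr' KF'].
  destruct Hzp' as [_ Hp'].
  assert (Mo := ift_expanding p' k (ift_inverse z' p')
                  ltac:(lra) ltac:(unfold r in *; lra) ltac:(unfold r in *; lra)).
  rewrite KF' in Mo.
  assert (A1 := Hd1 k p' ltac:(rewrite Rminus_eq_0, Rabs_R0; apply cond_pos) ltac:(lra)).
  rewrite KF in A1.
  assert (A2 : Rabs (z' - F k p') < m * e).
  { replace (z' - F k p') with ((z' - z) - (F k p' - z)) by ring.
    eapply Rle_lt_trans; [apply Rabs_triang|]. rewrite Rabs_Ropp. lra. }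
  apply Rmult_lt_reg_l with m; lra.
Qed.

Lemma ift_dom_open : open2 ift_dom.
Proof. apply open2_box. Qed.

Lemma ift_inverse_mvt z p z' p' : ift_dom z p -> ift_dom z' p' ->
  exists c, Rabs (c - ift_inverse z p) <= Rabs (ift_inverse z' p' - ift_inverse z p) /\
    m < Ft c p' /\
    z' - F (ift_inverse z p) p' = Ft c p' * (ift_inverse z' p' - ift_inverse z p).
Proof.
  intros Hzp Hzp'.
  set (k := ift_inverse z p). set (k' := ift_inverse z' p').
  destruct (ift_inverse_spec z p Hzp) as [Kr _]. fold k in Kr.
  destruct (ift_inverse_spec z' p' Hzp') as [Kr' KF']. fold k' in Kr', KF'.
  destruct Hzp' as [_ Hp'].
  assert (Hbtw : forall c, Rabs (c - k) <= Rabs (k' - k) -> U c p' /\ m < Ft c p').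
  { intros c Hc. apply Hbox; [|lra].
    assert (X := Rabs_between k k' c t0 r Kr Kr' Hc). unfold r in *; lra. }
  destruct (MVT_Rabs (fun s => F s p') (fun s => Ft s p') k k') as [c [Hc Ec]].
  { intros t Ht. apply HF, Hbtw; auto. }
  simpl in Ec. rewrite KF' in Ec.
  exists c. repeat split; auto. apply Hbtw; auto.
Qed.

Lemma ift_inverse_derive_l z p : ift_dom z p ->
  derivable_pt_lim (fun s => ift_inverse s p) z (1 / Ft (ift_inverse z p) p).
Proof.
  intros Hzp. set (k := ift_inverse z p).
  destruct (ift_inverse_spec z p Hzp) as [_ KF]. fold k in KF.
  destruct (ift_inverse_box z p Hzp) as [Uk Bk]. fold k in Uk, Bk.
  apply (derivable_pt_lim_of_quotients _ _ (fun _ _ => 1) Ft k p k p).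
  { apply continuity_2d_pt_const. }
  { eapply continuity_2d_pt_of_cont2_on; eauto. apply smooth2_cont; auto. }
  { lra. }
  intros d Hd0.
  destruct (ift_inverse_cont z p Hzp d Hd0) as [d1 [Hd1 Kc]].
  destruct Hzp as [Hz Hp].
  exists (Rmin d1 (eps - Rabs (z - z0))). split; [apply Rmin_pos; lra|].
  intros h Hh Hhe.
  assert (M1 := Rmin_l d1 (eps - Rabs (z - z0))).
  assert (M2 := Rmin_r d1 (eps - Rabs (z - z0))).
  assert (Hzp' : ift_dom (z + h) p).
  { split; auto. replace (z + h - z0) with (h + (z - z0)) by ring.
    eapply Rle_lt_trans; [apply Rabs_triang| lra]. }
  assert (Kc' := Kc (z + h) p Hzp' ltac:(replace (z + h - z) with h by ring; lra)
                  ltac:(rewrite Rminus_eq_0, Rabs_R0; lra)).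
  destruct (ift_inverse_mvt z p (z + h) p (conj Hz Hp) Hzp') as [c [Hc [Bc Ec]]].
  fold k in Kc', Hc, Ec. rewrite KF in Ec.
  exists k, p, c, p. rewrite !Rminus_eq_0, !Rabs_R0.
  repeat split; try lra. fold k.
  replace (ift_inverse (z + h) p - k) with (h / Ft c p); [field; lra|].
  replace h with (z + h - z) at 1 by ring. rewrite Ec. field. lra.
Qed.

Lemma ift_inverse_derive_r z p : ift_dom z p ->
  derivable_pt_lim (fun s => ift_inverse z s) p
    (- Fp (ift_inverse z p) p / Ft (ift_inverse z p) p).
Proof.
  intros Hzp. set (k := ift_inverse z p).
  destruct (ift_inverse_spec z p Hzp) as [Kr KF]. fold k in Kr, KF.
  destruct (ift_inverse_box z p Hzp) as [Uk Bk]. fold k in Uk, Bk.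
  apply (derivable_pt_lim_of_quotients _ _ (fun a b => - Fp a b) Ft k p k p).
  { apply continuity_2d_pt_opp.
    eapply continuity_2d_pt_of_cont2_on; eauto. apply smooth2_cont; auto. }
  { eapply continuity_2d_pt_of_cont2_on; eauto. apply smooth2_cont; auto. }
  { lra. }
  intros d Hd0.
  destruct (ift_inverse_cont z p Hzp d Hd0) as [d1 [Hd1 Kc]].
  destruct Hzp as [Hz Hp].
  exists (Rmin (Rmin d1 d) (dl - Rabs (p - p0))). split; [repeat apply Rmin_pos; lra|].
  intros h Hh Hhe.
  assert (M1 := Rmin_l (Rmin d1 d) (dl - Rabs (p - p0))).
  assert (M2 := Rmin_r (Rmin d1 d) (dl - Rabs (p - p0))).
  assert (M3 := Rmin_l d1 d). assert (M4 := Rmin_r d1 d).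
  assert (Hzp' : ift_dom z (p + h)).
  { split; auto. replace (p + h - p0) with (h + (p - p0)) by ring.
    eapply Rle_lt_trans; [apply Rabs_triang| lra]. }
  assert (Kc' := Kc z (p + h) Hzp' ltac:(rewrite Rminus_eq_0, Rabs_R0; lra)
                  ltac:(replace (p + h - p) with h by ring; lra)).
  destruct (ift_inverse_mvt z p z (p + h) (conj Hz Hp) Hzp') as [c [Hc [Bc Ec]]].
  fold k in Kc', Hc, Ec.
  destruct (MVT_Rabs (fun s => F k s) (fun s => Fp k s) p (p + h)) as [c2 [Hc2 Ec2]].
  { intros t Ht. apply HF, Hbox; [unfold r in *; lra|].
    replace (p + h - p) with h in Ht by ring.
    replace (t - p0) with ((t - p) + (p - p0)) by ring.
    eapply Rle_lt_trans; [apply Rabs_triang| lra]. }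
  simpl in Ec2. rewrite KF in Ec2. replace (p + h - p) with h in Ec2, Hc2 by ring.
  exists k, c2, c, (p + h). rewrite !Rminus_eq_0, !Rabs_R0.
  replace (p + h - p) with h by ring.
  repeat split; try lra. fold k.
  replace (ift_inverse z (p + h) - k) with (h * (- Fp k c2) / Ft c (p + h)); [field; lra|].
  apply Rmult_eq_reg_l with (Ft c (p + h)); [|lra].
  field_simplify; lra.
Qed.

Lemma ift_inverse_smooth : smooth2 ift_dom ift_inverse.
Proof.
  intro n. induction n as [|n IH]; [exact ift_inverse_cont|].
  assert (OO := ift_dom_open).
  assert (IU : forall z p, ift_dom z p -> U (ift_inverse z p) p)
    by (intros; apply ift_inverse_box; auto).
  assert (CFt : Ck2 n ift_dom (fun z p => Ft (ift_inverse z p) p))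
    by (apply (Ck2_comp n ift_dom U Ft ift_inverse (fun _ p => p)); auto; apply Ck2_snd).
  assert (CFp : Ck2 n ift_dom (fun z p => Fp (ift_inverse z p) p))
    by (apply (Ck2_comp n ift_dom U Fp ift_inverse (fun _ p => p)); auto; apply Ck2_snd).
  assert (CFt' : Ck2 n ift_dom (fun z p => / Ft (ift_inverse z p) p)).
  { apply Ck2_inv; auto. intros z p Hzp.
    assert (X := proj2 (ift_inverse_box z p Hzp)). lra. }
  exists (fun z p => 1 / Ft (ift_inverse z p) p),
         (fun z p => - Fp (ift_inverse z p) p / Ft (ift_inverse z p) p).
  split; [intros; split; [apply ift_inverse_derive_l| apply ift_inverse_derive_r]; auto|].
  split; apply Ck2_mult; auto.
  - apply Ck2_const.
  - apply (Ck2_ext n ift_dom (fun z p => -1 * Fp (ift_inverse z p) p)); auto; [intros; ring|].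
    apply Ck2_mult; auto. apply Ck2_const.
Qed.

End Inverse.
End ImplicitFunction.

Definition local_inverse (U : R -> R -> Prop) (F K : R -> R -> R) t0 p0 eps dl r : Prop :=
  0 < eps /\ 0 < dl /\ 0 < r /\
  (forall t p, Rabs (t - t0) < r -> Rabs (p - p0) < dl -> U t p) /\
  (forall t p, Rabs (t - t0) < r -> Rabs (p - p0) < dl -> Rabs (F t p - F t0 p0) < eps ->
     K (F t p) p = t) /\
  (forall z p, Rabs (z - F t0 p0) < eps -> Rabs (p - p0) < dl ->
     Rabs (K z p - t0) < r /\ F (K z p) p = z) /\
  smooth2 (fun z p => Rabs (z - F t0 p0) < eps /\ Rabs (p - p0) < dl) K.

Lemma implicit_function_pos U F Ft Fp t0 p0 : open2 U -> U t0 p0 ->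
  (forall t p, U t p -> derivable_pt_lim (fun s => F s p) t (Ft t p) /\
                        derivable_pt_lim (fun s => F t s) p (Fp t p)) ->
  smooth2 U F -> smooth2 U Ft -> smooth2 U Fp -> 0 < Ft t0 p0 ->
  exists eps dl r K, local_inverse U F K t0 p0 eps dl r.
Proof.
  intros HO H0 HF SF SFt SFp Hpos.
  set (m := Ft t0 p0 / 2). assert (Hm : 0 < m) by (unfold m; lra).
  destruct (continuity_2d_pt_of_cont2_on U Ft t0 p0 HO (smooth2_cont U Ft HO SFt) H0
              (mkposreal _ Hm)) as [da Hda]. simpl in Hda.
  destruct (HO t0 p0 H0) as [r0 [Hr0 HU0]].
  set (R0 := Rmin da r0).
  assert (HR0 : 0 < R0) by (apply Rmin_pos; [apply cond_pos| lra]).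
  assert (M1 := Rmin_l da r0). assert (M2 := Rmin_r da r0).
  assert (Hbox : forall t p, Rabs (t - t0) < R0 -> Rabs (p - p0) < R0 -> U t p /\ m < Ft t p).
  { intros t p Ht Hp. split; [apply HU0; unfold R0 in *; lra|].
    assert (Hx := Hda t p ltac:(unfold R0 in *; lra) ltac:(unfold R0 in *; lra)).
    apply Rabs_def2 in Hx. unfold m in *. lra. }
  destruct (ift_endpoint_gap U F Ft Fp t0 p0 m R0 HO HF SF Hm HR0 Hbox) as [dl [Hdl Hgap]].
  exists (m * (R0 / 4) / 2), dl, (R0 / 4), (ift_inverse F t0 R0).
  assert (Hr : 0 < R0 / 4) by lra.
  split; [nra|]. split; [lra|]. split; [lra|].
  split; [intros t p Ht Hp; apply Hbox; lra|].
  split; [intros t p Ht Hp Hz;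
          now apply (ift_inverse_unique U F Ft Fp t0 p0 m R0 HF Hm HR0 Hbox dl)|].
  split; [intros z p Hz Hp;
          now apply (ift_inverse_spec U F Ft Fp t0 p0 m R0 HF HR0 Hbox dl)|].
  exact (ift_inverse_smooth U F Ft Fp t0 p0 m R0 HO HF SF SFt SFp Hm HR0 Hbox dl Hdl Hgap).
Qed.

Lemma implicit_function U F Ft Fp t0 p0 : open2 U -> U t0 p0 ->
  (forall t p, U t p -> derivable_pt_lim (fun s => F s p) t (Ft t p) /\
                        derivable_pt_lim (fun s => F t s) p (Fp t p)) ->
  smooth2 U F -> smooth2 U Ft -> smooth2 U Fp -> Ft t0 p0 <> 0 ->
  exists eps dl r K, local_inverse U F K t0 p0 eps dl r.
Proof.
  intros HO H0 HF SF SFt SFp Hn.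
  destruct (Rlt_or_le 0 (Ft t0 p0)) as [Hpos|Hneg];
    [apply (implicit_function_pos U F Ft Fp); auto|].
  destruct (implicit_function_pos U (fun t p => - F t p) (fun t p => - Ft t p)
              (fun t p => - Fp t p) t0 p0)
    as [eps [dl [r [K [He [Hdl [Hr [P1 [P2 [P3 P4]]]]]]]]]];
    auto; try (apply smooth2_opp; auto); try lra.
  { intros t p Htp. destruct (HF t p Htp) as [D1 D2].
    split; apply derivable_pt_lim_opp; auto. }
  assert (Eopp : forall a b, Rabs (- a - - b) = Rabs (a - b))
    by (intros; rewrite <- Rabs_Ropp; f_equal; ring).
  exists eps, dl, r, (fun z p => K (- z) p).
  split; [auto|]. split; [auto|]. split; [auto|]. split; [auto|].
  split; [intros t p Ht Hp Hf; apply P2; rewrite ?Eopp; auto|].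
  split; [intros z p Hz Hp; destruct (P3 (- z) p) as [Q1 Q2]; rewrite ?Eopp; auto; lra|].
  apply (smooth2_comp _ (fun z p => Rabs (z - - F t0 p0) < eps /\ Rabs (p - p0) < dl));
    try apply open2_box; auto.
  - apply smooth2_opp; [apply open2_box| apply smooth2_fst].
  - apply smooth2_snd.
  - intros z p [Hz Hp]. rewrite Eopp. auto.
Qed.

Definition diffeo2 (V W : R -> R -> Prop) (h1 h2 g1 g2 : R -> R -> R) : Prop :=
  open2 V /\ open2 W /\
  smooth2 W h1 /\ smooth2 W h2 /\ smooth2 V g1 /\ smooth2 V g2 /\
  (forall x y, W x y ->
     V (h1 x y) (h2 x y) /\ g1 (h1 x y) (h2 x y) = x /\ g2 (h1 x y) (h2 x y) = y) /\
  (forall u v, V u v ->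
     W (g1 u v) (g2 u v) /\ h1 (g1 u v) (g2 u v) = u /\ h2 (g1 u v) (g2 u v) = v).

Lemma open2_band c e : open2 (fun a _ => Rabs (a - c) < e).
Proof.
  intros x y Hx. exists (e - Rabs (x - c)). split; [lra|].
  intros x' y' Hx' _. replace (x' - c) with ((x' - x) + (x - c)) by ring.
  eapply Rle_lt_trans; [apply Rabs_triang| lra].
Qed.

Lemma diffeo2_comp V W h1 h2 g1 g2 W' X k1 k2 l1 l2 :
  diffeo2 V W h1 h2 g1 g2 -> diffeo2 W' X k1 k2 l1 l2 -> (forall x y, W' x y -> W x y) ->
  diffeo2 (fun u v => V u v /\ W' (g1 u v) (g2 u v)) X
    (fun x y => h1 (k1 x y) (k2 x y)) (fun x y => h2 (k1 x y) (k2 x y))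
    (fun u v => l1 (g1 u v) (g2 u v)) (fun u v => l2 (g1 u v) (g2 u v)).
Proof.
  intros [OV [OW [Sh1 [Sh2 [Sg1 [Sg2 [HWV HVW]]]]]]]
         [OW' [OX [Sk1 [Sk2 [Sl1 [Sl2 [HXW HWX]]]]]]] Hsub.
  assert (OV' : open2 (fun u v => V u v /\ W' (g1 u v) (g2 u v)))
    by (apply open2_preimage; auto; apply smooth2_cont; auto).
  assert (HXW0 : forall x y, X x y -> W (k1 x y) (k2 x y))
    by (intros x y Hxy; apply Hsub, HXW; auto).
  assert (HV'W' : forall u v, V u v /\ W' (g1 u v) (g2 u v) -> W' (g1 u v) (g2 u v))
    by (intros u v [_ H]; auto).
  repeat split; auto.
  - apply (smooth2_comp X W h1 k1 k2); auto.
  - apply (smooth2_comp X W h2 k1 k2); auto.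
  - apply (smooth2_comp _ W' l1 g1 g2); auto;
      apply (smooth2_restrict V); auto; intros u v [H _]; auto.
  - apply (smooth2_comp _ W' l2 g1 g2); auto;
      apply (smooth2_restrict V); auto; intros u v [H _]; auto.
  - apply HWV, HXW0; auto.
  - destruct (HWV _ _ (HXW0 x y H)) as [_ [-> ->]]. apply HXW; auto.
  - destruct (HWV _ _ (HXW0 x y H)) as [_ [-> ->]]. apply HXW; auto.
  - destruct (HWV _ _ (HXW0 x y H)) as [_ [-> ->]]. apply HXW; auto.
  - destruct H as [_ H]. apply HWX; auto.
  - destruct H as [HV H]. destruct (HWX _ _ H) as [_ [-> ->]]. apply HVW; auto.
  - destruct H as [HV H]. destruct (HWX _ _ H) as [_ [-> ->]]. apply HVW; auto.
Qed.

Lemma diffeo2_swap_target V W h1 h2 g1 g2 : diffeo2 V W h1 h2 g1 g2 ->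
  diffeo2 (fun u v => V v u) W h2 h1 (fun u v => g1 v u) (fun u v => g2 v u).
Proof.
  intros [OV [OW [Sh1 [Sh2 [Sg1 [Sg2 [HWV HVW]]]]]]].
  repeat split; auto; try (apply open2_swap; auto); try (apply smooth2_swap; auto);
    try (apply HWV; auto); apply HVW; auto.
Qed.

Lemma diffeo2_swap_source V W h1 h2 g1 g2 : diffeo2 V W h1 h2 g1 g2 ->
  diffeo2 V (fun x y => W y x) (fun x y => h1 y x) (fun x y => h2 y x) g2 g1.
Proof.
  intros [OV [OW [Sh1 [Sh2 [Sg1 [Sg2 [HWV HVW]]]]]]].
  repeat split; auto; try (apply open2_swap; auto); try (apply smooth2_swap; auto);
    try (apply HWV; auto); apply HVW; auto.
Qed.

Lemma diffeo2_of_local_inverse U F K t0 p0 eps dl r :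
  smooth2 U F -> local_inverse U F K t0 p0 eps dl r ->
  diffeo2 (fun t p => (Rabs (t - t0) < r /\ Rabs (p - p0) < dl) /\
                      Rabs (F t p - F t0 p0) < eps)
          (fun z p => Rabs (z - F t0 p0) < eps /\ Rabs (p - p0) < dl)
          K (fun _ p => p) F (fun _ p => p).
Proof.
  intros SF [He [Hdl [Hr [Hbox [Hleft [Hright SK]]]]]].
  assert (Obox : open2 (fun t p => Rabs (t - t0) < r /\ Rabs (p - p0) < dl))
    by apply open2_box.
  assert (SF' : smooth2 (fun t p => Rabs (t - t0) < r /\ Rabs (p - p0) < dl) F)
    by (apply (smooth2_restrict U); auto; intros t p [Ht Hp]; apply Hbox; auto).
  repeat split.
  - apply (open2_preimage _ (fun a _ => Rabs (a - F t0 p0) < eps) F (fun _ _ => 0));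
      auto; [apply open2_band| apply smooth2_cont; auto| apply (Ck2_const 0)].
  - apply open2_box.
  - exact SK.
  - apply smooth2_snd.
  - apply (smooth2_restrict _ _ F SF'); intros t p [H _]; auto.
  - apply smooth2_snd.
  - destruct H as [Hx Hy]; apply Hright; auto.
  - destruct H as [Hx Hy]; auto.
  - destruct H as [Hx Hy]; rewrite (proj2 (Hright x y Hx Hy)); auto.
  - destruct H as [Hx Hy]; apply Hright; auto.
  - destruct H as [[Hu Hv] HF]; auto.
  - destruct H as [[Hu Hv] HF]; auto.
  - destruct H as [[Hu Hv] HF]; apply Hleft; auto.
Qed.

(** * Linear algebra of [R^{2,1}] *)

Lemma vec_ext V W : v1 V = v1 W -> v2 V = v2 W -> v3 V = v3 W -> V = W.
Proof. destruct V, W; simpl; intros -> -> ->; reflexivity. Qed.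

Definition is_coord (pr : vec -> R) : Prop := pr = v1 \/ pr = v2 \/ pr = v3.

Lemma coord_vadd pr A B : is_coord pr -> pr (vadd A B) = pr A + pr B.
Proof. intros [->|[->| ->]]; reflexivity. Qed.

Lemma coord_vscale pr c A : is_coord pr -> pr (vscale c A) = c * pr A.
Proof. intros [->|[->| ->]]; reflexivity. Qed.

Lemma vec_ext_coord V W : (forall pr, is_coord pr -> pr V = pr W) -> V = W.
Proof. intros H. apply vec_ext; apply H; unfold is_coord; auto. Qed.

Lemma lightlike_v1_neq0 V : ip V V = 0 -> V <> vzero -> v1 V <> 0.
Proof.
  intros H Hn E. apply Hn. destruct V as [a b c]; unfold ip in H; simpl in *. subst.
  assert (b = 0) by nra. assert (c = 0) by nra. subst. reflexivity.
Qed.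

Lemma gram_system e f g a b : e * g - f * f <> 0 ->
  a * e + b * f = 0 -> a * f + b * g = 0 -> a = 0 /\ b = 0.
Proof.
  intros HD E1 E2.
  assert (X1 : a * (e * g - f * f) = 0)
    by (replace (a * (e * g - f * f)) with (g * (a * e + b * f) - f * (a * f + b * g))
          by ring; rewrite E1, E2; ring).
  assert (X2 : b * (e * g - f * f) = 0)
    by (replace (b * (e * g - f * f)) with (e * (a * f + b * g) - f * (a * e + b * f))
          by ring; rewrite E1, E2; ring).
  apply Rmult_integral in X1. apply Rmult_integral in X2. tauto.
Qed.

Lemma lin_indep2_of_timelike A B : timelike_plane A B -> lin_indep2 A B.
Proof.
  intros HT a b E.
  apply (gram_system (ip A A) (ip A B) (ip B B)); [unfold timelike_plane in HT; lra| |].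
  - transitivity (ip (vadd (vscale a A) (vscale b B)) A); [unfold ip; simpl; ring|].
    rewrite E. unfold ip, vzero; simpl; ring.
  - transitivity (ip (vadd (vscale a A) (vscale b B)) B); [unfold ip; simpl; ring|].
    rewrite E. unfold ip, vzero; simpl; ring.
Qed.

Lemma timelike_plane_ip_neq0 A B p q :
  timelike_plane A B -> vadd (vscale p A) (vscale q B) <> vzero ->
  ip A (vadd (vscale p A) (vscale q B)) <> 0 \/ ip B (vadd (vscale p A) (vscale q B)) <> 0.
Proof.
  intros HT Hn.
  destruct (Req_dec (ip A (vadd (vscale p A) (vscale q B))) 0) as [H1|H1]; [|left; auto].
  destruct (Req_dec (ip B (vadd (vscale p A) (vscale q B))) 0) as [H2|H2]; [|right; auto].
  exfalso. apply Hn.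
  destruct (gram_system (ip A A) (ip A B) (ip B B) p q) as [-> ->].
  - unfold timelike_plane in HT; lra.
  - rewrite <- H1. unfold ip; simpl; ring.
  - rewrite <- H2. unfold ip; simpl; ring.
  - apply vec_ext; simpl; ring.
Qed.

Lemma timelike_plane_orth_null A B p q a b :
  timelike_plane A B -> vadd (vscale p A) (vscale q B) <> vzero ->
  ip (vadd (vscale p A) (vscale q B)) (vadd (vscale p A) (vscale q B)) = 0 ->
  ip (vadd (vscale a A) (vscale b B)) (vadd (vscale p A) (vscale q B)) = 0 ->
  exists l, vadd (vscale a A) (vscale b B) = vscale l (vadd (vscale p A) (vscale q B)).
Proof.
  intros HT Hn HN HX.
  set (T := vadd (vscale p A) (vscale q B)) in *.
  set (X := vadd (vscale a A) (vscale b B)) in *.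
  assert (Id : ip X X * ip T T - ip X T * ip X T =
               (a * q - b * p) ^ 2 * (ip A A * ip B B - ip A B * ip A B))
    by (unfold X, T, ip; simpl; ring).
  rewrite HN, HX in Id. unfold timelike_plane in HT.
  assert (Hz : a * q - b * p = 0).
  { assert (E : (a * q - b * p) ^ 2 * (ip A A * ip B B - ip A B * ip A B) = 0)
      by (rewrite <- Id; ring).
    apply Rmult_integral in E. destruct E as [E|E]; [|lra].
    nra. }
  destruct (Req_dec p 0) as [Hp|Hp].
  - assert (Hq : q <> 0).
    { intro Hq. apply Hn. unfold T; rewrite Hp, Hq. apply vec_ext; simpl; ring. }
    assert (Ha : a = 0) by (subst p; apply Rmult_eq_reg_r with q; auto; lra).
    exists (b / q). unfold X, T. rewrite Ha, Hp. apply vec_ext; simpl; field; auto.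
  - exists (a / p). unfold X, T.
    assert (Hb : b = a * q / p) by (apply Rmult_eq_reg_r with p; auto; field_simplify; lra).
    rewrite Hb. apply vec_ext; simpl; field; auto.
Qed.

Lemma null_orth_parallel V N : ip V V = 0 -> ip N N = 0 -> ip V N = 0 -> v1 N <> 0 ->
  V = vscale (v1 V / v1 N) N.
Proof.
  intros H1 H2 H3 Hn. unfold ip in *. destruct V as [x1 x2 x3], N as [n1 n2 n3]; simpl in *.
  assert (S : (x2 * n1 - x1 * n2) ^ 2 + (x3 * n1 - x1 * n3) ^ 2 = 0).
  { replace ((x2 * n1 - x1 * n2) ^ 2 + (x3 * n1 - x1 * n3) ^ 2) with
      ((x2 * x2 + x3 * x3) * (n1 * n1) - 2 * (x1 * n1) * (x2 * n2 + x3 * n3)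
       + (x1 * x1) * (n2 * n2 + n3 * n3)) by ring.
    replace (x2 * x2 + x3 * x3) with (x1 * x1) by lra.
    replace (n2 * n2 + n3 * n3) with (n1 * n1) by lra.
    replace (x2 * n2 + x3 * n3) with (x1 * n1) by lra. ring. }
  assert (P1 := pow2_ge_0 (x2 * n1 - x1 * n2)). assert (P2 := pow2_ge_0 (x3 * n1 - x1 * n3)).
  assert (A1 : (x2 * n1 - x1 * n2) ^ 2 = 0) by lra.
  assert (A2 : (x3 * n1 - x1 * n3) ^ 2 = 0) by lra.
  simpl in A1, A2. rewrite Rmult_1_r in A1, A2.
  apply Rmult_integral in A1. apply Rmult_integral in A2.
  assert (x2 * n1 = x1 * n2) by (destruct A1; lra).
  assert (x3 * n1 = x1 * n3) by (destruct A2; lra).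
  apply vec_ext; simpl; apply Rmult_eq_reg_r with n1; auto; field_simplify; auto; lra.
Qed.

(* Lorentzian cross product: [ip (lcross Z V) W] is the determinant of [Z, V, W]. *)
Definition lcross (Z V : vec) : vec :=
  mkV (- (v2 Z * v3 V - v3 Z * v2 V)) (v3 Z * v1 V - v1 Z * v3 V) (v1 Z * v2 V - v2 Z * v1 V).

(* On a null vector [V] orthogonal to [Z], [lcross Z] acts as multiplication by
   [null_eigenvalue Z V], whose square is [ip Z Z]; its sign tells apart the (at
   most two) null lines of [Z^perp]. *)
Definition null_eigenvalue (Z V : vec) : R := v1 (lcross Z V) / v1 V.

Lemma lcross_null_eigen Z V : ip V V = 0 -> ip Z V = 0 -> v1 V <> 0 ->
  lcross Z V = vscale (null_eigenvalue Z V) V.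
Proof.
  intros H1 H2 Hn. unfold null_eigenvalue, lcross, ip, vscale in *.
  destruct Z as [a b c], V as [x y z]; simpl in *.
  assert (K1 : (c * x - a * z) * x + (b * z - c * y) * y =
               - c * (- x * x + y * y + z * z) + z * (- a * x + b * y + c * z)) by ring.
  assert (K2 : (a * y - b * x) * x + (b * z - c * y) * z =
               b * (- x * x + y * y + z * z) - y * (- a * x + b * y + c * z)) by ring.
  rewrite H1, H2 in K1, K2.
  apply vec_ext; simpl; apply Rmult_eq_reg_r with x; auto; field_simplify; auto; lra.
Qed.

Lemma null_eigenvalue_sqr Z V : ip V V = 0 -> ip Z V = 0 -> v1 V <> 0 ->
  null_eigenvalue Z V * null_eigenvalue Z V = ip Z Z.
Proof.
  intros H1 H2 Hn. unfold null_eigenvalue, lcross, ip in *.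
  destruct Z as [a b c], V as [x y z]; simpl in *.
  assert (K : (b * z - c * y) * (b * z - c * y) - (- a * a + b * b + c * c) * (x * x) =
     (b * b + c * c) * (- x * x + y * y + z * z) - 2 * a * x * (- a * x + b * y + c * z)
     - (- a * x + b * y + c * z) * (- a * x + b * y + c * z)) by ring.
  rewrite H1, H2 in K.
  apply Rmult_eq_reg_r with (x * x); [|intro; apply Hn; nra].
  field_simplify; auto. lra.
Qed.

Lemma null_eigen_parallel Z V N : Z <> vzero ->
  ip V V = 0 -> ip Z V = 0 -> v1 V <> 0 ->
  ip N N = 0 -> ip Z N = 0 -> v1 N <> 0 ->
  null_eigenvalue Z V = null_eigenvalue Z N -> V = vscale (v1 V / v1 N) N.
Proof.
  intros HZ HV ZV V1 HN ZN N1 Hk.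
  destruct (Req_dec (null_eigenvalue Z N) 0) as [K0|K0].
  - (* then [Z] is itself null, and both [V] and [N] lie on its line *)
    assert (ZZ : ip Z Z = 0) by (rewrite <- (null_eigenvalue_sqr Z N), K0; auto; ring).
    assert (Z1 : v1 Z <> 0) by (apply lightlike_v1_neq0; auto).
    assert (EV := null_orth_parallel V Z HV ZZ ltac:(unfold ip in *; lra) Z1).
    assert (EN := null_orth_parallel N Z HN ZZ ltac:(unfold ip in *; lra) Z1).
    set (sV := v1 V / v1 Z) in EV. set (sN := v1 N / v1 Z) in EN.
    assert (HsN : sN <> 0) by (intro E0; apply N1; rewrite EN; simpl; rewrite E0; ring).
    rewrite EV, EN. apply vec_ext; simpl; field; auto.
  - apply null_orth_parallel; auto.
    assert (S : ip (lcross Z V) N = - ip (lcross Z N) V) by (unfold lcross, ip; simpl; ring).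
    rewrite (lcross_null_eigen Z V), (lcross_null_eigen Z N), Hk in S; auto.
    unfold ip, vscale in S; simpl in S.
    assert (E : null_eigenvalue Z N * (2 * ip V N) = 0) by (unfold ip; lra).
    apply Rmult_integral in E. destruct E; [contradiction| lra].
Qed.

Lemma tangential_part_null_orth Z a b : timelike_plane a b ->
  ip (tangential_part Z a b) (tangential_part Z a b) = ip (tangential_part Z a b) Z.
Proof.
  intros HT. unfold timelike_plane in HT.
  unfold tangential_part, ip in *. destruct Z, a, b; simpl in *. field. lra.
Qed.

Lemma tangential_part_vzero a b : tangential_part vzero a b = vzero.
Proof. unfold tangential_part, ip, vzero; simpl. apply vec_ext; simpl; unfold Rdiv; ring. Qed.

Lemma tangential_part_span Z a b :
  exists c d, tangential_part Z a b = vadd (vscale c a) (vscale d b).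
Proof. unfold tangential_part. eexists; eexists; reflexivity. Qed.

Lemma smooth_vec2_coord U A : smooth_vec2 U A ->
  forall pr, is_coord pr -> smooth2 U (fun x y => pr (A x y)).
Proof. intros [H1 [H2 H3]] pr [->|[->| ->]]; auto. Qed.

Lemma smooth_vec2_of_coord U A :
  (forall pr, is_coord pr -> smooth2 U (fun x y => pr (A x y))) -> smooth_vec2 U A.
Proof. intros H. unfold is_coord in H; repeat split; apply H; auto. Qed.

Lemma smooth_vec2_const U C : smooth_vec2 U (fun _ _ => C).
Proof. repeat split; apply smooth2_const. Qed.

Ltac smooth2_arith := repeat first
  [ assumption
  | apply smooth2_const | apply smooth2_fst | apply smooth2_snd
  | apply smooth2_plus | apply smooth2_minus; [assumption| |]
  | apply smooth2_mult; [assumption| |] | apply smooth2_opp; [assumption|]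
  | apply smooth2_inv; [assumption| solve [auto] |] ].

Lemma smooth2_ip U A B : open2 U -> smooth_vec2 U A -> smooth_vec2 U B ->
  smooth2 U (fun x y => ip (A x y) (B x y)).
Proof. intros HO [A1 [A2 A3]] [B1 [B2 B3]]. unfold ip. smooth2_arith. Qed.

Lemma smooth_vec2_tangential_part U Z a b : open2 U -> smooth_vec2 U a -> smooth_vec2 U b ->
  (forall x y, U x y -> timelike_plane (a x y) (b x y)) ->
  smooth_vec2 U (fun x y => tangential_part Z (a x y) (b x y)).
Proof.
  intros HO Ha Hb HT.
  assert (E := smooth2_ip U a a HO Ha Ha). assert (Fm := smooth2_ip U a b HO Ha Hb).
  assert (G := smooth2_ip U b b HO Hb Hb).
  assert (Za := smooth2_ip U (fun _ _ => Z) a HO (smooth_vec2_const U Z) Ha).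
  assert (Zb := smooth2_ip U (fun _ _ => Z) b HO (smooth_vec2_const U Z) Hb).
  assert (Dn : forall x y, U x y -> ip (a x y) (a x y) * ip (b x y) (b x y)
                                  - ip (a x y) (b x y) * ip (a x y) (b x y) <> 0)
    by (intros x y H; specialize (HT x y H); unfold timelike_plane in HT; lra).
  assert (SD : smooth2 U (fun x y => ip (a x y) (a x y) * ip (b x y) (b x y)
                                   - ip (a x y) (b x y) * ip (a x y) (b x y)))
    by smooth2_arith.
  destruct Ha as [a1 [a2 a3]]. destruct Hb as [b1 [b2 b3]].
  unfold tangential_part; simpl. unfold Rdiv. repeat split; smooth2_arith.
Qed.

(** * The null direction of [Z^T] *)

Lemma cont2_on_sqr_locally_const U f c u0 v0 : open2 U -> cont2_on U f -> U u0 v0 ->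
  (forall u v, U u v -> f u v * f u v = c) ->
  exists rho, 0 < rho /\ forall u v, Rabs (u - u0) < rho -> Rabs (v - v0) < rho ->
    U u v /\ f u v = f u0 v0.
Proof.
  intros HO HC H0 Hsq.
  destruct (HO u0 v0 H0) as [r0 [Hr0 HU0]].
  destruct (Req_dec (f u0 v0) 0) as [K0|K0].
  - exists r0; split; auto. intros u v Hu Hv. assert (Huv := HU0 u v Hu Hv).
    split; auto. rewrite K0.
    assert (E : f u v * f u v = 0) by (rewrite Hsq, <- (Hsq u0 v0), K0; auto; ring).
    apply Rmult_integral in E. tauto.
  - assert (Hk : 0 < Rabs (f u0 v0)) by (apply Rabs_pos_lt; auto).
    destruct (continuity_2d_pt_of_cont2_on U f u0 v0 HO HC H0 (mkposreal _ Hk)) as [d Hd].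
    simpl in Hd.
    exists (Rmin r0 d). split; [apply Rmin_pos; [auto| apply cond_pos]|].
    intros u v Hu Hv.
    assert (M1 := Rmin_l r0 d). assert (M2 := Rmin_r r0 d).
    assert (Huv := HU0 u v ltac:(lra) ltac:(lra)). split; auto.
    assert (Dk := Hd u v ltac:(lra) ltac:(lra)).
    assert (F1 : (f u v - f u0 v0) * (f u v + f u0 v0) = 0)
      by (replace ((f u v - f u0 v0) * (f u v + f u0 v0))
            with (f u v * f u v - f u0 v0 * f u0 v0) by ring;
          rewrite (Hsq u v), (Hsq u0 v0); auto; ring).
    apply Rmult_integral in F1. destruct F1 as [F1|F1]; [lra|].
    exfalso. replace (f u v - f u0 v0) with (- (2 * f u0 v0)) in Dk by lra.
    rewrite Rabs_Ropp, Rabs_mult, (Rabs_right 2) in Dk by lra. lra.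
Qed.

Lemma null_direction_locally_const U a b Z u0 v0 : open2 U -> U u0 v0 ->
  smooth_vec2 U a -> smooth_vec2 U b ->
  (forall x y, U x y -> timelike_plane (a x y) (b x y)) ->
  (forall x y, U x y -> lightlike (tangential_part Z (a x y) (b x y))) ->
  exists rho, 0 < rho /\ forall u v, Rabs (u - u0) < rho -> Rabs (v - v0) < rho ->
    U u v /\ exists c d,
      tangential_part Z (a u0 v0) (b u0 v0) = vadd (vscale c (a u v)) (vscale d (b u v)).
Proof.
  intros HO H0 Sa Sb HT HN.
  set (X := fun x y => tangential_part Z (a x y) (b x y)).
  assert (Orth : forall x y, U x y -> ip Z (X x y) = 0).
  { intros x y H. assert (E := tangential_part_null_orth Z (a x y) (b x y) (HT x y H)).
    destruct (HN x y H) as [_ Hn]. fold (X x y) in E, Hn. unfold ip in *; lra. }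
  assert (Zn : Z <> vzero).
  { intro EZ. destruct (HN u0 v0 H0) as [Hn _]. apply Hn. rewrite EZ. apply tangential_part_vzero. }
  assert (X1 : forall x y, U x y -> v1 (X x y) <> 0)
    by (intros x y H; destruct (HN x y H); apply lightlike_v1_neq0; auto).
  assert (SX : smooth_vec2 U X) by (apply smooth_vec2_tangential_part; auto).
  assert (SK : smooth2 U (fun x y => null_eigenvalue Z (X x y))).
  { destruct SX as [s1 [s2 s3]]. unfold null_eigenvalue, lcross; simpl.
    apply smooth2_div; auto. smooth2_arith. }
  destruct (cont2_on_sqr_locally_const U _ (ip Z Z) u0 v0 HO (smooth2_cont U _ HO SK) H0)
    as [rho [Hrho Hs]].
  { intros u v H. destruct (HN u v H). apply null_eigenvalue_sqr; auto. }
  exists rho; split; auto. intros u v Hu Hv. destruct (Hs u v Hu Hv) as [Huv Hk].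
  split; auto.
  destruct (HN u v Huv) as [_ L1]. destruct (HN u0 v0 H0) as [_ L0].
  assert (P := null_eigen_parallel Z (X u v) (X u0 v0) Zn L1 (Orth u v Huv) (X1 u v Huv)
                 L0 (Orth u0 v0 H0) (X1 u0 v0 H0) Hk).
  set (l := v1 (X u v) / v1 (X u0 v0)) in P.
  assert (Hl : l <> 0)
    by (unfold l; apply Rmult_integral_contrapositive; split;
        [apply X1; auto| apply Rinv_neq_0_compat; apply X1; auto]).
  destruct (tangential_part_span Z (a u v) (b u v)) as [c [d Ecd]].
  exists (c / l), (d / l). fold (X u0 v0). fold (X u v) in Ecd.
  apply vec_ext_coord. intros pr Hpr.
  assert (E1 : pr (X u v) = l * pr (X u0 v0)) by (rewrite P at 1; apply coord_vscale; auto).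
  rewrite Ecd, coord_vadd, !coord_vscale in E1 by auto.
  rewrite coord_vadd, !coord_vscale by auto.
  apply Rmult_eq_reg_l with l; auto. rewrite <- E1. field; auto.
Qed.

Lemma is_partials_coord U phi phix phiy : is_partials U phi phix phiy ->
  forall pr, is_coord pr -> forall x y, U x y ->
    derivable_pt_lim (fun t => pr (phi t y)) x (pr (phix x y)) /\
    derivable_pt_lim (fun t => pr (phi x t)) y (pr (phiy x y)).
Proof.
  intros H pr Hpr x y Hxy. destruct (H x y Hxy) as [D1 [D2 [D3 [D4 [D5 D6]]]]].
  destruct Hpr as [->|[->| ->]]; auto.
Qed.

Lemma smooth_vec2_partials U phi phix phiy : open2 U -> smooth_vec2 U phi ->
  is_partials U phi phix phiy -> smooth_vec2 U phix /\ smooth_vec2 U phiy.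
Proof.
  intros HO Sphi HP.
  assert (Spr : forall pr, is_coord pr ->
            smooth2 U (fun x y => pr (phix x y)) /\ smooth2 U (fun x y => pr (phiy x y))).
  { intros pr Hpr. apply (smooth2_partials_of U (fun x y => pr (phi x y))); auto;
      [apply smooth_vec2_coord| apply is_partials_coord]; auto. }
  split; apply smooth_vec2_of_coord; intros pr Hpr; apply Spr; auto.
Qed.

Lemma smooth_vec2_restrict U V A : smooth_vec2 U A -> (forall x y, V x y -> U x y) ->
  smooth_vec2 V A.
Proof. intros [A1 [A2 A3]] HV; repeat split; apply (smooth2_restrict U); auto. Qed.

Lemma smooth_vec1_of_coord I A :
  (forall pr, is_coord pr -> smooth1 I (fun x => pr (A x))) -> smooth_vec1 I A.
Proof. intros H. unfold is_coord in H; repeat split; apply H; auto. Qed.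

Lemma is_deriv_vec1_of_coord (I : R -> Prop) A dA :
  (forall x, I x -> forall pr, is_coord pr ->
     derivable_pt_lim (fun t => pr (A t)) x (pr (dA x))) -> is_deriv_vec1 I A dA.
Proof. intros H x Hx. unfold is_coord in H; repeat split; apply H; auto. Qed.

Lemma derivable_pt_lim_ip_l (A : R -> vec) T x a :
  (forall pr, is_coord pr -> derivable_pt_lim (fun t => pr (A t)) x (pr a)) ->
  derivable_pt_lim (fun t => ip (A t) T) x (ip a T).
Proof.
  intros H. unfold ip.
  apply derivable_pt_lim_plus; [apply derivable_pt_lim_plus|];
    [replace (- v1 a * v1 T) with (- v1 T * v1 a) by ring|
     replace (v2 a * v2 T) with (v2 T * v2 a) by ring|
     replace (v3 a * v3 T) with (v3 T * v3 a) by ring];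
    eapply derivable_pt_lim_locally_ext with (a := x - 1) (b := x + 1);
    try (apply derivable_pt_lim_scal; apply H; unfold is_coord; auto); try lra;
    intros; unfold mult_real_fct; ring.
Qed.

Lemma partials_comp U V f fx fy G1 G2 G1x G1y G2x G2y x y : open2 V ->
  (forall a b, V a b -> derivable_pt_lim (fun t => f t b) a (fx a b) /\
                        derivable_pt_lim (fun t => f a t) b (fy a b)) ->
  smooth2 V fx -> smooth2 V fy ->
  (forall a b, U a b -> derivable_pt_lim (fun t => G1 t b) a (G1x a b) /\
                        derivable_pt_lim (fun t => G1 a t) b (G1y a b)) ->
  (forall a b, U a b -> derivable_pt_lim (fun t => G2 t b) a (G2x a b) /\
                        derivable_pt_lim (fun t => G2 a t) b (G2y a b)) ->
  (forall a b, U a b -> V (G1 a b) (G2 a b)) -> U x y ->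
  derivable_pt_lim (fun t => f (G1 t y) (G2 t y)) x
     (fx (G1 x y) (G2 x y) * G1x x y + fy (G1 x y) (G2 x y) * G2x x y) /\
  derivable_pt_lim (fun t => f (G1 x t) (G2 x t)) y
     (fx (G1 x y) (G2 x y) * G1y x y + fy (G1 x y) (G2 x y) * G2y x y).
Proof.
  intros HV Hf Sx Sy H1 H2 HG Hxy.
  assert (Dif := Ck2_differentiable V f fx fy (G1 x y) (G2 x y) HV (HG x y Hxy) Hf
                   (smooth2_cont V fx HV Sx) (smooth2_cont V fy HV Sy)).
  split.
  - apply (derivable_pt_lim_comp_2d f (fun t => G1 t y) (fun t => G2 t y)); auto;
      [apply H1| apply H2]; auto.
  - apply (derivable_pt_lim_comp_2d f (fun t => G1 x t) (fun t => G2 x t)); auto;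
      [apply H1| apply H2]; auto.
Qed.

Lemma curve_parallel_line (c dc : R -> vec) T s0 s : v1 T <> 0 ->
  is_deriv_vec1 (fun t => Rabs (t - s0) <= Rabs (s - s0)) c dc ->
  (forall t, Rabs (t - s0) <= Rabs (s - s0) -> exists l, dc t = vscale l T) ->
  c s = vadd (c s0) (vscale ((v1 (c s) - v1 (c s0)) / v1 T) T).
Proof.
  intros HT Hd Hpar. apply vec_ext_coord. intros pr Hpr.
  rewrite coord_vadd, coord_vscale by auto.
  set (D := fun t => pr (c t) - (v1 (c t) / v1 T) * pr T).
  assert (ED : D s = D s0).
  { apply derivable_pt_lim_zero_const. intros t Ht.
    destruct (Hpar t Ht) as [l El]. destruct (Hd t Ht) as [D1 [D2 D3]].
    assert (Dpr : derivable_pt_lim (fun t => pr (c t)) t (pr (dc t)))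
      by (destruct Hpr as [->|[->| ->]]; auto).
    replace 0 with (pr (dc t) - (v1 (dc t) / v1 T) * pr T)
      by (rewrite El, coord_vscale by auto; simpl; field; auto).
    apply derivable_pt_lim_minus; auto.
    replace (v1 (dc t) / v1 T * pr T) with (pr T / v1 T * v1 (dc t)) by (field; auto).
    apply (derivable_pt_lim_locally_ext (mult_real_fct (pr T / v1 T) (fun t => v1 (c t))))
      with (a := t - 1) (b := t + 1); [lra| intros; unfold mult_real_fct; field; auto|].
    apply derivable_pt_lim_scal; auto. }
  unfold D in ED.
  replace ((v1 (c s) - v1 (c s0)) / v1 T * pr T)
    with (v1 (c s) / v1 T * pr T - v1 (c s0) / v1 T * pr T) by (field; auto).
  lra.
Qed.

Lemma lightlike_shift b T : lightlike T -> ip b T = 1 ->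
  lightlike (vadd b (vscale (- ip b b / 2) T)) /\
  lin_indep2 (vadd b (vscale (- ip b b / 2) T)) T.
Proof.
  intros [Tn TT] HbT. set (q := - ip b b / 2).
  assert (E1 : forall a c, ip (vadd (vscale a (vadd b (vscale q T))) (vscale c T)) T = a)
    by (intros; transitivity (a * ip b T + (a * q + c) * ip T T);
        [unfold ip; simpl; ring| rewrite HbT, TT; ring]).
  split; [split|].
  - intro E. assert (X := E1 1 0).
    replace (vadd (vscale 1 (vadd b (vscale q T))) (vscale 0 T)) with vzero in X
      by (rewrite <- E; apply vec_ext; simpl; ring).
    unfold ip, vzero in X; simpl in X. lra.
  - transitivity (ip b b + 2 * q * ip b T + q * q * ip T T); [unfold ip; simpl; ring|].
    rewrite HbT, TT. unfold q; field.
  - intros a c E. assert (Ha : a = 0) by (rewrite <- (E1 a c), E; unfold ip, vzero; simpl; ring).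
    split; auto. subst a.
    assert (E' : v1 (vadd (vscale 0 (vadd b (vscale q T))) (vscale c T)) = 0) by (rewrite E; auto).
    simpl in E'. assert (c * v1 T = 0) by lra.
    assert (T1 := lightlike_v1_neq0 T TT Tn). apply Rmult_integral in H. tauto.
Qed.

(** * Null-ruled reparametrization *)

Definition cylinder_chart (U : R -> R -> Prop) (phi : R -> R -> vec) (u0 v0 : R) : Prop :=
  exists (V W : R -> R -> Prop) (a b : R) (alpha dalpha : R -> vec) (T0 : vec)
         (h1 h2 g1 g2 : R -> R -> R),
    diffeo2 V W h1 h2 g1 g2 /\ (forall u v, V u v -> U u v) /\ V u0 v0 /\
    a < b /\ (forall x y, W x y -> a < x < b) /\
    smooth_vec1 (fun x => a < x < b) alpha /\
    is_deriv_vec1 (fun x => a < x < b) alpha dalpha /\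
    (forall x, a < x < b -> lightlike (dalpha x)) /\
    lightlike T0 /\ (forall x, a < x < b -> lin_indep2 (dalpha x) T0) /\
    (forall x y, W x y -> phi (h1 x y) (h2 x y) = vadd (alpha x) (vscale y T0)).

Lemma cylinder_chart_swap U phi u0 v0 :
  cylinder_chart (fun u v => U v u) (fun u v => phi v u) v0 u0 -> cylinder_chart U phi u0 v0.
Proof.
  intros [V [W [a [b [al [dal [T0 [h1 [h2 [g1 [g2 [D [VU [V0 R]]]]]]]]]]]]]].
  exists (fun u v => V v u), W, a, b, al, dal, T0, h2, h1,
    (fun u v => g1 v u), (fun u v => g2 v u).
  split; [apply diffeo2_swap_target; auto|]. split; [intros u v H; apply (VU v u H)|].
  split; [auto|]. exact R.
Qed.

Section NullRuled.

Variables (U : R -> R -> Prop) (phi phix phiy : R -> R -> vec) (T0 : vec) (u0 v0 : R).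
Hypotheses (HO : open2 U) (H0 : U u0 v0).
Hypotheses (Sphi : smooth_vec2 U phi) (Sx : smooth_vec2 U phix) (Sy : smooth_vec2 U phiy).
Hypothesis HP : is_partials U phi phix phiy.
Hypothesis HT : forall x y, U x y -> timelike_plane (phix x y) (phiy x y).
Hypothesis Hspan : forall x y, U x y ->
  exists c d, T0 = vadd (vscale c (phix x y)) (vscale d (phiy x y)).
Hypothesis HT0 : lightlike T0.

Let F u v := ip (phi u v) T0.

Let T01 : v1 T0 <> 0. Proof. destruct HT0; apply lightlike_v1_neq0; auto. Qed.

Lemma null_coordinate_partials t p : U t p ->
  derivable_pt_lim (fun s => F s p) t (ip (phix t p) T0) /\
  derivable_pt_lim (fun s => F t s) p (ip (phiy t p) T0).
Proof.
  intros Htp. split; apply derivable_pt_lim_ip_l; intros pr Hpr;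
    apply (is_partials_coord U phi phix phiy HP pr Hpr t p Htp).
Qed.

Lemma null_coordinate_smooth : smooth2 U F.
Proof. apply smooth2_ip; auto. apply smooth_vec2_const. Qed.

Section Reparametrized.

Variables (eps1 dl1 r1 : R) (K1 : R -> R -> R).
Hypothesis HK1 : local_inverse U F K1 u0 v0 eps1 dl1 r1.

Let x0 := F u0 v0.
Let O1 x v := Rabs (x - x0) < eps1 /\ Rabs (v - v0) < dl1.

Let OO1 : open2 O1. Proof. apply open2_box. Qed.

Lemma K1_in_U x v : O1 x v -> U (K1 x v) v.
Proof.
  intros [Hx Hv]. destruct HK1 as [_ [_ [_ [Hbox [_ [Hright _]]]]]].
  apply Hbox; auto. apply Hright; auto.
Qed.

Lemma null_coordinate_K1 x v : O1 x v -> F (K1 x v) v = x.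
Proof. intros [Hx Hv]. destruct HK1 as [_ [_ [_ [_ [_ [Hright _]]]]]]. apply Hright; auto. Qed.

Variables (K1x K1v : R -> R -> R).
Hypothesis DK1 : forall x v, O1 x v ->
  derivable_pt_lim (fun t => K1 t v) x (K1x x v) /\ derivable_pt_lim (fun t => K1 x t) v (K1v x v).
Hypothesis SK1x : smooth2 O1 K1x.

Let P x v := phi (K1 x v) v.
Let Px x v := vscale (K1x x v) (phix (K1 x v) v).
Let Pv x v := vadd (vscale (K1v x v) (phix (K1 x v) v)) (phiy (K1 x v) v).

Lemma reparam_partials pr x v : is_coord pr -> O1 x v ->
  derivable_pt_lim (fun t => pr (P t v)) x (pr (Px x v)) /\
  derivable_pt_lim (fun t => pr (P x t)) v (pr (Pv x v)).
Proof.
  intros Hpr Hxv.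
  destruct (partials_comp O1 U (fun a b => pr (phi a b)) (fun a b => pr (phix a b))
              (fun a b => pr (phiy a b)) K1 (fun _ v => v) K1x K1v (fun _ _ => 0) (fun _ _ => 1)
              x v HO) as [E1 E2]; auto.
  - apply (is_partials_coord U phi phix phiy HP pr Hpr).
  - apply smooth_vec2_coord; auto.
  - apply smooth_vec2_coord; auto.
  - intros a b Hab; split; [apply derivable_pt_lim_const| apply derivable_pt_lim_id].
  - exact K1_in_U.
  - unfold Px, Pv. rewrite coord_vadd, !coord_vscale by auto.
    split; [replace (K1x x v * pr (phix (K1 x v) v))
              with (pr (phix (K1 x v) v) * K1x x v + pr (phiy (K1 x v) v) * 0) by ring
           |replace (K1v x v * pr (phix (K1 x v) v) + pr (phiy (K1 x v) v))
              with (pr (phix (K1 x v) v) * K1v x v + pr (phiy (K1 x v) v) * 1) by ring];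
      auto.
Qed.

Lemma reparam_smooth pr : is_coord pr -> smooth2 O1 (fun x v => pr (P x v)).
Proof.
  intros Hpr. apply (smooth2_comp O1 U (fun a b => pr (phi a b)) K1 (fun _ v => v)); auto.
  - apply smooth_vec2_coord; auto.
  - destruct HK1 as [_ [_ [_ [_ [_ [_ SK]]]]]]. exact SK.
  - apply smooth2_snd.
  - exact K1_in_U.
Qed.

Lemma ip_Px_T0 x v : O1 x v -> ip (Px x v) T0 = 1.
Proof.
  intros Hxv. apply (uniqueness_limite (fun t => ip (P t v) T0) x).
  - apply derivable_pt_lim_ip_l; intros pr Hpr; apply reparam_partials; auto.
  - apply (derivable_pt_lim_open2_ext_l O1 (fun a _ => a) (fun a b => ip (P a b) T0)); auto;
      [intros a b Hab; symmetry; apply null_coordinate_K1; auto| apply derivable_pt_lim_id].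
Qed.

Lemma ip_Pv_T0 x v : O1 x v -> ip (Pv x v) T0 = 0.
Proof.
  intros Hxv. apply (uniqueness_limite (fun t => ip (P x t) T0) v).
  - apply derivable_pt_lim_ip_l; intros pr Hpr; apply reparam_partials; auto.
  - apply (derivable_pt_lim_open2_ext_r O1 (fun a _ => a) (fun a b => ip (P a b) T0)); auto;
      [intros a b Hab; symmetry; apply null_coordinate_K1; auto| apply derivable_pt_lim_const].
Qed.

(* [Pv] is tangent and orthogonal to the tangent null vector [T0], hence parallel to it. *)
Lemma Pv_parallel x v : O1 x v -> exists l, l <> 0 /\ Pv x v = vscale l T0.
Proof.
  intros Hxv. assert (Hu := K1_in_U x v Hxv).
  destruct (Hspan _ _ Hu) as [p [q Epq]]. destruct HT0 as [Tn TT].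
  rewrite Epq in Tn, TT.
  destruct (timelike_plane_orth_null (phix (K1 x v) v) (phiy (K1 x v) v) p q (K1v x v) 1
              (HT _ _ Hu) Tn TT) as [l El].
  { rewrite <- Epq. replace (vadd (vscale (K1v x v) (phix (K1 x v) v))
                                  (vscale 1 (phiy (K1 x v) v))) with (Pv x v)
      by (apply vec_ext; unfold Pv; simpl; ring).
    apply ip_Pv_T0; auto. }
  rewrite <- Epq in El. exists l. split.
  - intros ->. destruct (lin_indep2_of_timelike _ _ (HT _ _ Hu) (K1v x v) 1) as [_ E1]; [|lra].
    rewrite El. apply vec_ext; simpl; ring.
  - rewrite <- El. apply vec_ext; unfold Pv; simpl; ring.
Qed.

Lemma reparam_ruled x v : O1 x v ->
  P x v = vadd (P x v0) (vscale ((v1 (P x v) - v1 (P x v0)) / v1 T0) T0).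
Proof.
  intros [Hx Hv].
  assert (Hseg : forall s, Rabs (s - v0) <= Rabs (v - v0) -> O1 x s) by (split; auto; lra).
  apply (curve_parallel_line (fun s => P x s) (fun s => Pv x s)); auto.
  - apply is_deriv_vec1_of_coord. intros s Hs pr Hpr. apply reparam_partials; auto.
  - intros s Hs. destruct (Pv_parallel x s (Hseg s Hs)) as [l [_ El]]. eauto.
Qed.

Let I1 x := x0 - eps1 < x < x0 + eps1.
Let Q x := - ip (Px x v0) (Px x v0) / 2.
Let mu x := RInt Q x0 x.
Let alpha x := vadd (P x v0) (vscale (mu x) T0).
Let dalpha x := vadd (Px x v0) (vscale (Q x) T0).
Let Y x v := (v1 (P x v) - v1 (P x v0)) / v1 T0 - mu x.

Let O1_I1 x v : O1 x v -> I1 x.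
Proof. intros [Hx _]. apply Rabs_def2 in Hx. unfold I1; lra. Qed.

Let I1_O1 x : I1 x -> O1 x v0.
Proof.
  intros Hx. destruct HK1 as [_ [Hdl _]].
  split; [apply Rabs_def1; unfold I1 in Hx; lra| rewrite Rminus_eq_0, Rabs_R0; auto].
Qed.

Lemma smooth2_at_v0 f : smooth2 O1 f -> smooth2 O1 (fun x _ => f x v0).
Proof.
  intros Sf. apply (smooth2_comp O1 O1 f (fun x _ => x) (fun _ _ => v0)); auto.
  - apply smooth2_fst.
  - apply smooth2_const.
  - intros x y Hxy. eapply I1_O1, O1_I1; eauto.
Qed.

Lemma Q_smooth : smooth1 I1 Q.
Proof.
  apply (smooth2_slice O1 I1 (fun x _ => Q x) v0); [|intros x Hx; apply I1_O1; auto].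
  assert (SPx : smooth_vec2 O1 (fun x _ => Px x v0)).
  { apply smooth_vec2_of_coord. intros pr Hpr. unfold Px.
    apply (smooth2_ext O1 (fun x _ => K1x x v0 * pr (phix (K1 x v0) v0))); auto;
      [intros; rewrite coord_vscale; auto|].
    apply smooth2_mult; auto; [apply smooth2_at_v0; auto|].
    apply (smooth2_at_v0 (fun x v => pr (phix (K1 x v) v))).
    apply (smooth2_comp O1 U (fun a b => pr (phix a b)) K1 (fun _ v => v)); auto.
    - apply smooth_vec2_coord; auto.
    - destruct HK1 as [_ [_ [_ [_ [_ [_ SK]]]]]]. exact SK.
    - apply smooth2_snd.
    - exact K1_in_U. }
  unfold Q. apply smooth2_div; [exact OO1| intros; lra| |apply smooth2_const].
  apply smooth2_opp; auto. apply (smooth2_ip O1 (fun x _ => Px x v0) (fun x _ => Px x v0)); auto.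
Qed.

Lemma mu_derive x : I1 x -> derivable_pt_lim mu x (Q x).
Proof.
  apply (derivable_pt_lim_RInt Q (x0 - eps1) (x0 + eps1) x0); [|apply (Q_smooth 0%nat)].
  destruct HK1 as [He _]. lra.
Qed.

Lemma alpha_derive : is_deriv_vec1 I1 alpha dalpha.
Proof.
  apply is_deriv_vec1_of_coord. intros x Hx pr Hpr.
  apply (derivable_pt_lim_locally_ext (fun t => pr (P t v0) + pr T0 * mu t))
    with (a := x - 1) (b := x + 1);
    [lra| intros; unfold alpha; rewrite coord_vadd, coord_vscale; auto; ring|].
  unfold dalpha. rewrite coord_vadd, coord_vscale by auto.
  replace (pr (Px x v0) + Q x * pr T0) with (pr (Px x v0) + pr T0 * Q x) by ring.
  apply derivable_pt_lim_plus; [apply reparam_partials; auto|].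
  apply (derivable_pt_lim_scal mu (pr T0)). apply mu_derive; auto.
Qed.

Lemma alpha_smooth : smooth_vec1 I1 alpha.
Proof.
  apply smooth_vec1_of_coord. intros pr Hpr.
  assert (Smu : smooth1 I1 mu) by (apply (smooth1_of_derive I1 mu Q mu_derive Q_smooth)).
  apply (smooth2_slice O1 I1 (fun x _ => pr (alpha x)) v0); [|intros x Hx; apply I1_O1; auto].
  apply (smooth2_ext O1 (fun x _ => pr (P x v0) + mu x * pr T0)); auto;
    [intros; unfold alpha; rewrite coord_vadd, coord_vscale; auto|].
  apply smooth2_plus; [apply (smooth2_at_v0 (fun x v => pr (P x v))), reparam_smooth; auto|].
  apply smooth2_mult; auto; [|apply smooth2_const].
  apply (smooth2_of_smooth1 I1); auto.
Qed.

Lemma dalpha_lightlike x : I1 x -> lightlike (dalpha x) /\ lin_indep2 (dalpha x) T0.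
Proof. intros Hx. apply lightlike_shift; auto. apply ip_Px_T0, I1_O1; auto. Qed.

Lemma reparam_cylinder x v : O1 x v -> P x v = vadd (alpha x) (vscale (Y x v) T0).
Proof.
  intros Hxv. rewrite (reparam_ruled x v Hxv) at 1. unfold alpha, Y.
  apply vec_ext_coord; intros pr Hpr. rewrite !coord_vadd, !coord_vscale by auto. ring.
Qed.

Lemma Y_smooth : smooth2 O1 Y.
Proof.
  assert (S1 : smooth2 O1 (fun x v => v1 (P x v))) by (apply reparam_smooth; left; auto).
  apply smooth2_minus; auto.
  - apply smooth2_div; [exact OO1| intros; auto| |apply smooth2_const].
    apply smooth2_minus; auto. apply (smooth2_at_v0 (fun x v => v1 (P x v))); auto.
  - apply (smooth2_of_smooth1 I1); auto. apply (smooth1_of_derive I1 mu Q mu_derive Q_smooth).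
Qed.

Lemma Y_derive_r x v : O1 x v -> derivable_pt_lim (fun t => Y x t) v (v1 (Pv x v) / v1 T0).
Proof.
  intros Hxv.
  apply (derivable_pt_lim_locally_ext
           (fun t => / v1 T0 * v1 (P x t) + (- v1 (P x v0) / v1 T0 - mu x)))
    with (a := v - 1) (b := v + 1); [lra| intros; unfold Y; field; auto|].
  replace (v1 (Pv x v) / v1 T0) with (/ v1 T0 * v1 (Pv x v) + 0) by (field; auto).
  apply derivable_pt_lim_plus; [|apply derivable_pt_lim_const].
  apply (derivable_pt_lim_scal (fun t => v1 (P x t))). apply reparam_partials; auto. left; auto.
Qed.

Lemma Y_derive_r_neq0 x v : O1 x v -> v1 (Pv x v) / v1 T0 <> 0.
Proof.
  intros Hxv. destruct (Pv_parallel x v Hxv) as [l [Hl El]].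
  rewrite El. simpl. replace (l * v1 T0 / v1 T0) with l by (field; auto). auto.
Qed.

Lemma reparam_cylinder_chart : cylinder_chart U phi u0 v0.
Proof.
  assert (SF := null_coordinate_smooth).
  assert (chart1 := diffeo2_of_local_inverse U F K1 u0 v0 eps1 dl1 r1 SF HK1).
  destruct (smooth2_partials O1 Y OO1 Y_smooth) as [Yx [Yv [DY [SYx SYv]]]].
  assert (HO1 : O1 x0 v0) by (apply I1_O1; destruct HK1; unfold I1; lra).
  assert (Yv0 : Yv x0 v0 <> 0).
  { rewrite (uniqueness_limite _ _ _ _ (proj2 (DY x0 v0 HO1)) (Y_derive_r x0 v0 HO1)).
    apply Y_derive_r_neq0; auto. }
  destruct (implicit_function (fun t p => O1 p t) (fun t p => Y p t) (fun t p => Yv p t)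
              (fun t p => Yx p t) v0 x0) as [eps2 [dl2 [r2 [K2 HK2]]]]; auto.
  { apply open2_swap; auto. }
  { intros t p Htp. destruct (DY p t Htp); split; auto. }
  { apply (smooth2_swap O1 Y Y_smooth). }
  { apply (smooth2_swap O1 Yv SYv). }
  { apply (smooth2_swap O1 Yx SYx). }
  assert (chart2 := diffeo2_swap_target _ _ _ _ _ _ (diffeo2_swap_source _ _ _ _ _ _
           (diffeo2_of_local_inverse _ _ _ _ _ _ _ _ (smooth2_swap O1 Y Y_smooth) HK2))).
  cbv beta in chart2.
  assert (Hsub : forall x v, ((Rabs (v - v0) < r2 /\ Rabs (x - x0) < dl2) /\
                              Rabs (Y x v - Y x0 v0) < eps2) -> O1 x v).
  { intros x v [[Hv Hx] _]. destruct HK2 as [_ [_ [_ [Hbox _]]]]. apply Hbox; auto. }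
  assert (D := diffeo2_comp _ _ _ _ _ _ _ _ _ _ _ _ chart1 chart2 Hsub).
  cbv beta in D.
  destruct HK1 as [He1 [Hdl1 [Hr1 [Hbox1 _]]]].
  eexists _, _, (x0 - eps1), (x0 + eps1), alpha, dalpha, T0, _, _, _, _.
  destruct chart2 as [_ [_ [_ [_ [_ [_ [HWV2 _]]]]]]].
  assert (Hz : forall a, Rabs (a - a) = 0) by (intros; rewrite Rminus_eq_0; apply Rabs_R0).
  cbv beta. split; [exact D|].
  split; [intros u v [[[Hu Hv] _] _]; apply Hbox1; auto|].
  split; [rewrite !Hz; destruct HK2 as [? [? [? _]]]; repeat split; auto|].
  split; [lra|].
  split; [intros x y Hxy; destruct (HWV2 x y Hxy) as [Hv _]; apply (O1_I1 x (K2 y x)); auto|].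
  split; [exact alpha_smooth|]. split; [exact alpha_derive|].
  split; [intros x Hx; apply dalpha_lightlike; auto|]. split; [exact HT0|].
  split; [intros x Hx; apply dalpha_lightlike; auto|].
  intros x y Hxy. destruct (HWV2 x y Hxy) as [Hv [_ EY]].
  change (P x (K2 y x) = vadd (alpha x) (vscale y T0)).
  rewrite reparam_cylinder, EY; auto.
Qed.

End Reparametrized.

Lemma null_ruled_chart : ip (phix u0 v0) T0 <> 0 -> cylinder_chart U phi u0 v0.
Proof.
  intros Hgrad.
  assert (SFx : smooth2 U (fun u v => ip (phix u v) T0))
    by (apply smooth2_ip; auto; apply smooth_vec2_const).
  assert (SFy : smooth2 U (fun u v => ip (phiy u v) T0))
    by (apply smooth2_ip; auto; apply smooth_vec2_const).
  destruct (implicit_function U F _ _ u0 v0 HO H0 null_coordinate_partials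
              null_coordinate_smooth SFx SFy Hgrad) as [eps1 [dl1 [r1 [K1 HK1]]]].
  assert (SK1 : smooth2 (fun x v => Rabs (x - F u0 v0) < eps1 /\ Rabs (v - v0) < dl1) K1)
    by (destruct HK1 as [_ [_ [_ [_ [_ [_ SK]]]]]]; exact SK).
  destruct (smooth2_partials _ K1 (open2_box _ _ _ _) SK1) as [K1x [K1v [DK1 [SK1x _]]]].
  exact (reparam_cylinder_chart eps1 dl1 r1 K1 HK1 K1x K1v DK1 SK1x).
Qed.

End NullRuled.

Lemma cylinder_chart_mono U U' phi u0 v0 : (forall u v, U' u v -> U u v) ->
  cylinder_chart U' phi u0 v0 -> cylinder_chart U phi u0 v0.
Proof.
  intros HU [V [W [a [b [al [dal [T0 [h1 [h2 [g1 [g2 [D [VU R]]]]]]]]]]]]].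
  exists V, W, a, b, al, dal, T0, h1, h2, g1, g2. split; auto.
Qed.

(* One of the two coordinates can serve to solve [<phi, T0> = x]. *)
Lemma null_span_chart U phi phix phiy T0 u0 v0 : open2 U -> U u0 v0 ->
  smooth_vec2 U phi -> smooth_vec2 U phix -> smooth_vec2 U phiy ->
  is_partials U phi phix phiy ->
  (forall x y, U x y -> timelike_plane (phix x y) (phiy x y)) ->
  (forall x y, U x y -> exists c d, T0 = vadd (vscale c (phix x y)) (vscale d (phiy x y))) ->
  lightlike T0 -> cylinder_chart U phi u0 v0.
Proof.
  intros HO H0 Sphi Sx Sy HP HT Hspan HT0.
  destruct (Hspan u0 v0 H0) as [p [q Epq]]. assert (HT0' := HT0). destruct HT0' as [Tn _].
  rewrite Epq in Tn.
  destruct (timelike_plane_ip_neq0 _ _ p q (HT u0 v0 H0) Tn) as [Gx|Gy]; rewrite <- Epq in *.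
  - apply (null_ruled_chart U phi phix phiy T0); auto.
  - apply cylinder_chart_swap.
    apply (null_ruled_chart (fun u v => U v u) (fun u v => phi v u) (fun u v => phiy v u)
             (fun u v => phix v u) T0 v0 u0); auto.
    + apply open2_swap; auto.
    + apply smooth_vec2_of_coord; intros pr Hpr.
      apply (smooth2_swap U (fun x y => pr (phi x y))), smooth_vec2_coord; auto.
    + apply smooth_vec2_of_coord; intros pr Hpr.
      apply (smooth2_swap U (fun x y => pr (phiy x y))), smooth_vec2_coord; auto.
    + apply smooth_vec2_of_coord; intros pr Hpr.
      apply (smooth2_swap U (fun x y => pr (phix x y))), smooth_vec2_coord; auto.
    + intros x y Hxy. destruct (HP y x Hxy) as [D1 [D2 [D3 [D4 [D5 D6]]]]].
      repeat split; auto.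
    + intros x y Hxy. assert (Ht := HT y x Hxy). unfold timelike_plane, ip in *. lra.
    + intros x y Hxy. destruct (Hspan y x Hxy) as [c [d Ecd]]. exists d, c. rewrite Ecd.
      apply vec_ext; simpl; ring.
Qed.

Theorem mainTheorem10 (U : R -> R -> Prop) (phi phix phiy : R -> R -> vec) (Z : vec)
  (Hsurf : timelike_surface U phi phix phiy)
  (Hnull : canonical_null_direction U phix phiy Z) :
  forall u0 v0, U u0 v0 ->
  exists (V W : R -> R -> Prop) (a b : R) (alpha dalpha : R -> vec) (T0 : vec)
         (h1 h2 g1 g2 : R -> R -> R),
    open2 V /\ (forall u v, V u v -> U u v) /\ V u0 v0 /\
    open2 W /\ a < b /\ (forall x y, W x y -> a < x < b) /\
    smooth_vec1 (fun x => a < x < b) alpha /\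
    is_deriv_vec1 (fun x => a < x < b) alpha dalpha /\
    (forall x, a < x < b -> lightlike (dalpha x)) /\
    lightlike T0 /\
    (forall x, a < x < b -> lin_indep2 (dalpha x) T0) /\
    smooth2 W h1 /\ smooth2 W h2 /\ smooth2 V g1 /\ smooth2 V g2 /\
    (forall x y, W x y ->
       V (h1 x y) (h2 x y) /\ g1 (h1 x y) (h2 x y) = x /\ g2 (h1 x y) (h2 x y) = y) /\
    (forall u v, V u v ->
       W (g1 u v) (g2 u v) /\ h1 (g1 u v) (g2 u v) = u /\ h2 (g1 u v) (g2 u v) = v) /\
    (forall x y, W x y -> phi (h1 x y) (h2 x y) = vadd (alpha x) (vscale y T0)).
Proof.
  intros u0 v0 H0.
  destruct Hsurf as [HO [Sphi [HP [_ HT]]]].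
  destruct (smooth_vec2_partials U phi phix phiy HO Sphi HP) as [Sx Sy].
  destruct (null_direction_locally_const U phix phiy Z u0 v0 HO H0 Sx Sy HT Hnull)
    as [rho [Hrho Hsel]].
  set (B := fun u v => Rabs (u - u0) < rho /\ Rabs (v - v0) < rho).
  assert (BU : forall u v, B u v -> U u v) by (intros u v [Hu Hv]; apply Hsel; auto).
  assert (Chart : cylinder_chart B phi u0 v0).
  { apply (null_span_chart B phi phix phiy (tangential_part Z (phix u0 v0) (phiy u0 v0)));
      try (apply smooth_vec2_restrict with U); auto.
    - apply open2_box.
    - split; rewrite Rminus_eq_0, Rabs_R0; auto.
    - intros x y Hxy; apply HP; auto.
    - intros x y [Hx Hy]; apply Hsel; auto. }
  destruct (cylinder_chart_mono U B phi u0 v0 BU Chart)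
    as [V [W [a [b [al [dal [T0 [h1 [h2 [g1 [g2 [D R]]]]]]]]]]]].
  destruct D as [OV [OW [Sh1 [Sh2 [Sg1 [Sg2 [HWV HVW]]]]]]].
  exists V, W, a, b, al, dal, T0, h1, h2, g1, g2. tauto.
Qed.
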